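(* Let $a>0$ and $\psi_a(x)=\operatorname{sech}(ax)=\frac{2}{e^{ax}+e^{-ax}}$. There is a constant $C>0$ (depending only on $a$) such that every $f=\sum_{k\in\mathbb{Z}}c_k\psi_a(\cdot-k)$ with $c\in\ell^\infty(\mathbb{Z})$ has an extension to a meromorphic function on $\mathbb{C}$ whose set of poles $P_f$ satisfies $P_f\subseteq P:=\mathbb{Z}+\frac{i\pi}{a}(\frac12+\mathbb{Z})$; every pole of $f$ is simple; and for all $x+iy\in\mathbb{C}\setminus P$, $$|f(x+iy)|\le C\|c\|_\infty|\psi_a(\langle x\rangle+iy)|\le C\|c\|_\infty\min\Big\{|a\langle x\rangle|^{-1},\ \big|2\langle\tfrac{ay}{\pi}-\tfrac12\rangle\big|^{-1}\Big\}.$$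
   Context: For real $x$, $\langle x\rangle:=x-l$ where $l\in\mathbb{Z}$ is chosen so that $\langle x\rangle\in[-1/2,1/2)$. Here $\psi_a(z)=\operatorname{sech}(az)$ for complex $z$ denotes the meromorphic extension. *)

From Stdlib Require Import Reals ZArith.
From Coquelicot Require Import Coquelicot.
Open Scope R_scope.

(* <x> := x - l, l integer, <x> in [-1/2, 1/2) *)
Definition brk (x : R) : R := x - IZR (Int_part (x + / 2)).

Definition cexp (z : C) : C :=
  (exp (fst z) * cos (snd z), exp (fst z) * sin (snd z)).

Definition psi (a : R) (z : C) : C :=
  Cdiv (RtoC 2) (Cplus (cexp (Cmult (RtoC a) z)) (cexp (Copp (Cmult (RtoC a) z)))).

Definition Zseries (u : Z -> C) : C :=
  (Series (fun n => fst (u (Z.of_nat n))) + Series (fun n => fst (u (- Z.of_nat (S n))%Z)),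
   Series (fun n => snd (u (Z.of_nat n))) + Series (fun n => snd (u (- Z.of_nat (S n))%Z))).

Definition f_of (a : R) (c : Z -> C) (x : R) : C :=
  Zseries (fun k => Cmult (c k) (psi a (RtoC (x - IZR k)))).

Definition bounded_seq (c : Z -> C) : Prop := exists M : R, forall k, Cmod (c k) <= M.
Definition linf_norm (c : Z -> C) : R :=
  real (Lub_Rbar (fun r => exists k, r = Cmod (c k))).

Definition in_P (a : R) (z : C) : Prop :=
  exists m n : Z, z = (IZR m, PI / a * (/ 2 + IZR n)).

Definition cdiff (F : C -> C) (z : C) : Prop := @ex_derive C_AbsRing C_NormedModule F z.

Definition at_most_simple_pole (F : C -> C) (p : C) : Prop :=
  exists r : R, 0 < r /\ exists g : C -> C,
    (forall w, Cmod (Cminus w p) < r -> cdiff g w) /\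
    (forall w, 0 < Cmod (Cminus w p) < r -> F w = Cdiv (g w) (Cminus w p)).

(* Write [psi_a = 2 / D] with [D u = e^(a u) + e^(-a u)].  Since
   [|D (s + i t)|^2 = (e^(a s) - e^(-a s))^2 + 4 cos^2 (a t)], [D] vanishes exactly on
   [(i PI / a) (1/2 + Z)], and [|psi_a (s + i t)| <= C e^(-a|s|)] once [|s| >= 1/2].  So for
   [z = x + i y] every translate [psi_a (z - k)] is bounded by [C e^(-a|x - k|)], except the one
   with [|x - k| < 1/2], which equals [psi_a (<x> + i y)]; the weights [e^(-a|x - k|)] have a sum
   bounded independently of [x], which gives the first estimate.  Holomorphy off [P] follows from
   quadratic Taylor remainders of the terms with constants summable in [k].  Near a pole
   [p = m + (i PI / a) (1/2 + n)] only the [m]-th term is singular, and [(w - p) psi_a (w - m)]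
   extends holomorphically because [D'' = a^2 D] also vanishes at the zeros of [D].  The last two
   estimates are [|D (s + i t)| >= 2 sinh (a|s|) >= 2 a |s|] and
   [|D (s + i t)| >= 2 |cos (a t)| >= 4 |<a t / PI - 1/2>|] (Jordan's inequality). *)

From Stdlib Require Import Reals ZArith Lra Psatz Lia.
From Coquelicot Require Import Coquelicot.
Open Scope R_scope.

(** * Elementary real estimates *)

Lemma MVT_from_0 (f df : R -> R) (s : R) :
  (forall x, is_derive f x (df x)) ->
  exists c, Rabs c <= Rabs s /\ f s - f 0 = df c * s.
Proof.
  intros Hd.
  destruct (MVT_gen f 0 s df) as [c [Hc Heq]].
  - intros x _; apply Hd.
  - intros x _. apply derivable_continuous_pt.
    exists (df x). apply is_derive_Reals, Hd.
  - exists c. rewrite Rminus_0_r in Heq. split; [|exact Heq].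
    revert Hc. unfold Rmin, Rmax. destruct (Rle_dec 0 s); intros; unfold Rabs;
    repeat destruct Rcase_abs; lra.
Qed.

Lemma Rabs_sin_le t : Rabs (sin t) <= Rabs t.
Proof.
  destruct (MVT_from_0 sin cos t) as [c [_ H]].
  { intros x; auto_derive; auto; ring. }
  rewrite sin_0, Rminus_0_r in H. rewrite H, Rabs_mult.
  assert (Rabs (cos c) <= 1) by (apply Rabs_le, COS_bound).
  pose proof (Rabs_pos t). nra.
Qed.

Lemma Rabs_cos_sub_1_le t : Rabs (cos t - 1) <= t ^ 2.
Proof.
  destruct (MVT_from_0 cos (fun x => - sin x) t) as [c [Hc H]].
  { intros x; auto_derive; auto; ring. }
  rewrite cos_0 in H. rewrite H, Rabs_mult, Rabs_Ropp, <- pow2_abs.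
  pose proof (Rabs_sin_le c). pose proof (Rabs_pos c). nra.
Qed.

Lemma Rabs_sin_sub_le t : Rabs (sin t - t) <= Rabs t ^ 3.
Proof.
  destruct (MVT_from_0 (fun x => sin x - x) (fun x => cos x - 1) t) as [c [Hc H]].
  { intros x; auto_derive; auto; ring. }
  rewrite sin_0, !Rminus_0_r in H. rewrite H, Rabs_mult.
  pose proof (Rabs_cos_sub_1_le c). rewrite <- pow2_abs in H0.
  pose proof (Rabs_pos t). pose proof (Rabs_pos c).
  assert (Rabs c ^ 2 <= Rabs t ^ 2) by nra. nra.
Qed.

Lemma Rabs_exp_sub_1_le s : Rabs s <= 1 -> Rabs (exp s - 1) <= 3 * Rabs s.
Proof.
  intros Hs.
  destruct (MVT_from_0 exp exp s) as [c [Hc H]].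
  { intros x; auto_derive; auto; ring. }
  rewrite exp_0 in H. rewrite H, Rabs_mult, (Rabs_right (exp c)) by (left; apply exp_pos).
  assert (exp c <= 3).
  { pose proof exp_le_3. apply Rabs_le_between in Hc.
    destruct (Req_dec c 1) as [->|]; [lra|].
    pose proof (exp_increasing c 1 ltac:(lra)). lra. }
  pose proof (Rabs_pos s). nra.
Qed.

Lemma Rabs_exp_taylor1_le s : Rabs s <= 1 -> Rabs (exp s - 1 - s) <= 3 * s ^ 2.
Proof.
  intros Hs.
  destruct (MVT_from_0 (fun x => exp x - 1 - x) (fun x => exp x - 1) s) as [c [Hc H]].
  { intros x; auto_derive; auto; ring. }
  rewrite exp_0 in H. replace (exp s - 1 - s) with ((exp c - 1) * s) by lra.
  rewrite Rabs_mult, <- pow2_abs. pose proof (Rabs_exp_sub_1_le c ltac:(lra)).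
  pose proof (Rabs_pos s). pose proof (Rabs_pos c). nra.
Qed.

Lemma exp_le_exp x y : x <= y -> exp x <= exp y.
Proof. intros [H| ->]; [left; apply exp_increasing|]; lra. Qed.

Lemma exp_mul_exp_opp x : exp x * exp (- x) = 1.
Proof. rewrite <- exp_plus, Rplus_opp_r. apply exp_0. Qed.

Lemma exp_opp_bounds a : 0 < a -> 0 < exp (- a) < 1.
Proof. intros. split; [apply exp_pos|]. rewrite <- exp_0. apply exp_increasing. lra. Qed.

Lemma exp_add_exp_opp_le x : exp x + exp (- x) <= 2 * exp (Rabs x).
Proof.
  assert (exp x <= exp (Rabs x)) by (apply exp_le_exp, Rle_abs).
  assert (exp (- x) <= exp (Rabs x)) by (apply exp_le_exp; rewrite <- Rabs_Ropp; apply Rle_abs).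
  lra.
Qed.

Lemma Rabs_exp_sub_exp_opp x : Rabs (exp x - exp (- x)) = exp (Rabs x) - exp (- Rabs x).
Proof.
  unfold Rabs at 2 3. destruct (Rcase_abs x).
  - rewrite Rabs_left1, Ropp_involutive; [ring|].
    assert (exp x <= exp (- x)) by (apply exp_le_exp; lra). lra.
  - rewrite Rabs_right; [ring|].
    assert (exp (- x) <= exp x) by (apply exp_le_exp; lra). lra.
Qed.

Lemma exp_sub_exp_opp_ge x : 0 <= x -> 2 * x <= exp x - exp (- x).
Proof.
  intros Hx.
  destruct (MVT_from_0 (fun t => exp t - exp (- t) - 2 * t) (fun t => exp t + exp (- t) - 2) x)
    as [c [_ H]].
  { intros t. auto_derive; auto. ring. }
  rewrite Ropp_0, exp_0 in H.
  pose proof (exp_ineq1_le c). pose proof (exp_ineq1_le (- c)).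
  assert (0 <= (exp c + exp (- c) - 2) * x) by (apply Rmult_le_pos; lra).
  lra.
Qed.

Lemma Rabs_exp_add_exp_opp_sub_le s : Rabs s <= 1 -> Rabs (exp s + exp (- s) - 2) <= 6 * s ^ 2.
Proof.
  intros Hs. pose proof (Rabs_exp_taylor1_le s Hs).
  pose proof (Rabs_exp_taylor1_le (- s) ltac:(rewrite Rabs_Ropp; lra)).
  replace (exp s + exp (- s) - 2) with ((exp s - 1 - s) + (exp (- s) - 1 - - s)) by ring.
  eapply Rle_trans; [apply Rabs_triang|]. replace ((- s) ^ 2) with (s ^ 2) in * by ring. lra.
Qed.

Lemma Rabs_exp_sub_exp_opp_sub_le s :
  Rabs s <= 1 -> Rabs (exp s - exp (- s) - 2 * s) <= 6 * Rabs s ^ 3.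
Proof.
  intros Hs.
  destruct (MVT_from_0 (fun x => exp x - exp (- x) - 2 * x) (fun x => exp x + exp (- x) - 2) s)
    as [c [Hc H]].
  { intros x; auto_derive; auto; ring. }
  rewrite Ropp_0, exp_0 in H. replace (exp s - exp (- s) - 2 * s) with ((exp c + exp (- c) - 2) * s)
    by lra.
  rewrite Rabs_mult. pose proof (Rabs_exp_add_exp_opp_sub_le c ltac:(lra)).
  rewrite <- pow2_abs in H0. pose proof (Rabs_pos s). pose proof (Rabs_pos c).
  assert (Rabs c ^ 2 <= Rabs s ^ 2) by nra. nra.
Qed.

(* The split point [6/5] is where both the cubic Taylor bound for [sin] near 0 and the
   quadratic one for [cos] near [PI / 2] are sharp enough. *)
Lemma sin_ge_Jordan v : 0 <= v <= PI / 2 -> 2 * v / PI <= sin v.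
Proof.
  intros [H0 H1]. pose proof PI2_3_2 as P1. pose proof PI_4 as P2.
  assert (HP : 0 < PI) by lra.
  destruct (Rle_dec v (6/5)).
  - destruct (sin_bound v 0 H0 ltac:(lra)) as [S1 _].
    unfold sin_approx, sin_term in S1. simpl in S1.
    assert (2 * v / PI <= v - v ^ 3 / 6).
    { apply Rle_div_l; [lra|].
      replace ((v - v ^ 3 / 6) * PI) with (v * (PI * (1 - v ^ 2 / 6))) by (simpl; field).
      assert (PI * (1 - v ^ 2 / 6) >= 2) by nra. nra. }
    simpl in *. lra.
  - set (w := PI / 2 - v).
    assert (Hw : 0 <= w <= 4 / 5) by (unfold w; lra).
    rewrite <- (cos_shift v). fold w.
    destruct (cos_bound w 0 ltac:(lra) ltac:(lra)) as [C1 _].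
    unfold cos_approx, cos_term in C1. simpl in C1.
    assert (2 * v / PI = 1 - 2 * w / PI) by (unfold w; field; lra).
    assert (w ^ 2 / 2 <= 2 * w / PI) by (apply (Rle_div_r _ _ PI); [lra|];
      assert (w ^ 2 * PI <= w ^ 2 * 4) by (apply Rmult_le_compat_l; nra); nra).
    simpl in *. lra.
Qed.

Lemma Rabs_sin_PI_mul_ge b : Rabs b <= / 2 -> 2 * Rabs b <= Rabs (sin (PI * b)).
Proof.
  intros Hb. pose proof PI_RGT_0. apply Rabs_le_between in Hb.
  assert (Hv : 0 <= PI * Rabs b <= PI / 2).
  { split; [apply Rmult_le_pos; [lra|apply Rabs_pos]|].
    unfold Rabs; destruct Rcase_abs; nra. }
  assert (Rabs (sin (PI * b)) = sin (PI * Rabs b)).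
  { unfold Rabs at 2. destruct (Rcase_abs b).
    - replace (PI * - b) with (- (PI * b)) in * by ring. rewrite sin_neg in *.
      assert (0 <= - sin (PI * b)) by (rewrite <- sin_neg; apply sin_ge_0; nra).
      rewrite Rabs_left1; lra.
    - rewrite Rabs_right; auto. apply Rle_ge, sin_ge_0; nra. }
  rewrite H0. replace (2 * Rabs b) with (2 * (PI * Rabs b) / PI) by (field; lra).
  apply sin_ge_Jordan, Hv.
Qed.

(** * The complex exponential *)

Lemma Cmod_le_Rabs_add (z : C) : Cmod z <= Rabs (Re z) + Rabs (Im z).
Proof.
  destruct z as [x y]. unfold Cmod, Re, Im; cbn [fst snd].
  pose proof (Rabs_pos x); pose proof (Rabs_pos y).
  rewrite <- (sqrt_pow2 (Rabs x + Rabs y)) by lra. apply sqrt_le_1_alt.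
  rewrite <- (pow2_abs x), <- (pow2_abs y). nra.
Qed.

Lemma im_le_Cmod (z : C) : Rabs (Im z) <= Cmod z.
Proof.
  pose proof (Rmax_Cmod z). pose proof (Rmax_r (Rabs (fst z)) (Rabs (snd z))). unfold Im. lra.
Qed.

Lemma cexp_add u v : cexp (u + v)%C = (cexp u * cexp v)%C.
Proof.
  destruct u as [u1 u2], v as [v1 v2]. unfold cexp; simpl.
  rewrite exp_plus, cos_plus, sin_plus. apply injective_projections; simpl; ring.
Qed.

Lemma Cmod_cexp u : Cmod (cexp u) = exp (Re u).
Proof.
  destruct u as [s t]; unfold Cmod, cexp, Re; cbn [fst snd].
  replace ((exp s * cos t) ^ 2 + (exp s * sin t) ^ 2) with (exp s ^ 2 * (sin t ^ 2 + cos t ^ 2))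
    by ring.
  rewrite <- !Rsqr_pow2, sin2_cos2, Rsqr_pow2, Rmult_1_r.
  apply sqrt_pow2. left; apply exp_pos.
Qed.

Lemma Cmod_cexp_taylor1_le v : Cmod v <= 1 -> Cmod (cexp v - 1 - v)%C <= 5 * Cmod v ^ 2.
Proof.
  intros Hv. pose proof (re_le_Cmod v) as Hs. pose proof (im_le_Cmod v) as Ht.
  rewrite Cmod2_alt. destruct v as [s t]. unfold Re, Im in *; cbn [fst snd] in *.
  replace (cexp (s, t) - 1 - (s, t))%C
    with ((exp s - 1 - s) * cos t + (1 + s) * (cos t - 1), (exp s - 1) * sin t + (sin t - t))
    by (unfold cexp; apply injective_projections; simpl; ring).
  eapply Rle_trans; [apply Cmod_le_Rabs_add|]. unfold Re, Im; cbn [fst snd].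
  pose proof (Rabs_exp_taylor1_le s ltac:(lra)). pose proof (Rabs_exp_sub_1_le s ltac:(lra)).
  pose proof (Rabs_cos_sub_1_le t). pose proof (Rabs_sin_sub_le t). pose proof (Rabs_sin_le t).
  assert (Rabs (cos t) <= 1) by (apply Rabs_le, COS_bound).
  pose proof (Rabs_pos s); pose proof (Rabs_pos t).
  assert (Rabs (1 + s) <= 2) by (apply Rabs_le; apply Rabs_le_between in Hs; lra).
  assert (HRe : Rabs ((exp s - 1 - s) * cos t + (1 + s) * (cos t - 1)) <= 3 * s ^ 2 + 2 * t ^ 2).
  { eapply Rle_trans; [apply Rabs_triang|]. rewrite !Rabs_mult.
    pose proof (Rabs_pos (cos t - 1)). pose proof (Rabs_pos (exp s - 1 - s)).
    pose proof (Rabs_pos (1 + s)). pose proof (Rabs_pos (cos t)). nra. }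
  assert (HIm : Rabs ((exp s - 1) * sin t + (sin t - t)) <= 3 * Rabs s * Rabs t + t ^ 2).
  { eapply Rle_trans; [apply Rabs_triang|]. rewrite !Rabs_mult.
    pose proof (Rabs_pos (exp s - 1)). pose proof (Rabs_pos (sin t)).
    assert (Rabs t ^ 3 <= t ^ 2) by (rewrite <- (pow2_abs t); nra). nra. }
  rewrite <- (pow2_abs s), <- (pow2_abs t) in *.
  assert (2 * (Rabs s * Rabs t) <= Rabs s ^ 2 + Rabs t ^ 2)
    by (pose proof (pow2_ge_0 (Rabs s - Rabs t)); nra).
  nra.
Qed.

Lemma monomials3_le m x y : 0 <= x <= m -> 0 <= y <= m ->
  x ^ 2 * y <= m ^ 3 /\ x * y ^ 2 <= m ^ 3 /\ x ^ 3 <= m ^ 3.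
Proof.
  intros Hx Hy.
  assert (x * x <= m * m) by (apply Rmult_le_compat; lra).
  assert (x * y <= m * m) by (apply Rmult_le_compat; lra).
  assert (0 <= x * x) by nra. assert (0 <= x * y) by nra.
  repeat split; simpl; rewrite ?Rmult_1_r; nra.
Qed.

Lemma cexp_sub_cexp_opp_pair s t :
  (cexp (s, t) - cexp (- (s, t)) - 2 * (s, t))%C =
  ((exp s - exp (- s) - 2 * s) * cos t + 2 * s * (cos t - 1),
   (exp s + exp (- s) - 2) * sin t + 2 * (sin t - t)).
Proof.
  unfold cexp. apply injective_projections; simpl; rewrite ?cos_neg, ?sin_neg; ring.
Qed.

Lemma Cmod_cexp_sub_cexp_opp_le v :
  Cmod v <= 1 -> Cmod (cexp v - cexp (- v) - 2 * v)%C <= 20 * Cmod v ^ 3.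
Proof.
  intros Hv. pose proof (re_le_Cmod v) as Hs. pose proof (im_le_Cmod v) as Ht.
  pose proof (Cmod_ge_0 v) as H0.
  destruct v as [s t]. unfold Re, Im in *; cbn [fst snd] in *. set (m := Cmod (s, t)) in *.
  rewrite cexp_sub_cexp_opp_pair.
  eapply Rle_trans; [apply Cmod_le_Rabs_add|]. unfold Re, Im; cbn [fst snd].
  pose proof (Rabs_exp_sub_exp_opp_sub_le s ltac:(lra)) as Hsinh.
  pose proof (Rabs_exp_add_exp_opp_sub_le s ltac:(lra)) as Hcosh.
  rewrite <- (pow2_abs s) in Hcosh.
  pose proof (Rabs_cos_sub_1_le t) as Hcos. rewrite <- (pow2_abs t) in Hcos.
  pose proof (Rabs_sin_sub_le t). pose proof (Rabs_sin_le t).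
  assert (Rabs (cos t) <= 1) by (apply Rabs_le, COS_bound).
  pose proof (Rabs_pos s); pose proof (Rabs_pos t).
  pose proof (Rabs_pos (cos t - 1)). pose proof (Rabs_pos (cos t)).
  pose proof (Rabs_pos (exp s - exp (- s) - 2 * s)). pose proof (Rabs_pos (exp s + exp (- s) - 2)).
  destruct (monomials3_le m (Rabs s) (Rabs t)) as [A1 [A2 A3]]; try lra.
  destruct (monomials3_le m (Rabs t) (Rabs s)) as [B1 [B2 B3]]; try lra.
  assert (HRe : Rabs ((exp s - exp (- s) - 2 * s) * cos t + 2 * s * (cos t - 1)) <= 8 * m ^ 3).
  { eapply Rle_trans; [apply Rabs_triang|]. rewrite !Rabs_mult, (Rabs_right 2) by lra.
    assert (Rabs (exp s - exp (- s) - 2 * s) * Rabs (cos t) <= 6 * Rabs s ^ 3) by nra.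
    assert (Rabs s * Rabs (cos t - 1) <= Rabs s * Rabs t ^ 2)
      by (apply Rmult_le_compat_l; lra).
    lra. }
  assert (HIm : Rabs ((exp s + exp (- s) - 2) * sin t + 2 * (sin t - t)) <= 8 * m ^ 3).
  { eapply Rle_trans; [apply Rabs_triang|]. rewrite !Rabs_mult, (Rabs_right 2) by lra.
    assert (Rabs (exp s + exp (- s) - 2) * Rabs (sin t) <= 6 * Rabs s ^ 2 * Rabs t)
      by (apply Rmult_le_compat; try apply Rabs_pos; lra).
    lra. }
  lra.
Qed.

(** * Holomorphy from a quadratic Taylor remainder *)

Definition quad_approx (F : C -> C) (z L : C) : Prop :=
  exists r, 0 < r /\ exists M, forall h, Cmod h < r ->
    Cmod (F (z + h) - F z - L * h)%C <= M * Cmod h ^ 2.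

Lemma quad_approx_is_derive F z L :
  quad_approx F z L -> @is_derive C_AbsRing C_NormedModule F z L.
Proof.
  intros [r [Hr [M HM]]]. split; [apply is_linear_scal_l|].
  intros x Hx.
  apply (@is_filter_lim_locally_unique C_AbsRing (AbsRing_NormedModule C_AbsRing)) in Hx.
  subst x. intros eps.
  assert (Hd : 0 < Rmin r (eps / (Rabs M + 1))).
  { apply Rmin_pos; auto. apply Rdiv_lt_0_compat; [apply cond_pos|]. pose proof (Rabs_pos M); lra. }
  exists (mkposreal _ Hd). intros y Hy. simpl in Hy. change C in y.
  change (Cmod (F y - F z - (y - z) * L)%C <= eps * Cmod (y - z)%C).
  change (Cmod (y - z)%C < Rmin r (eps / (Rabs M + 1))) in Hy.
  pose proof (Rmin_l r (eps / (Rabs M + 1))). pose proof (Rmin_r r (eps / (Rabs M + 1))).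
  pose proof (HM (y - z)%C ltac:(lra)) as HH.
  replace (z + (y - z))%C with y in HH by ring.
  replace ((y - z) * L)%C with (L * (y - z))%C by ring.
  eapply Rle_trans; [exact HH|].
  pose proof (Cmod_ge_0 (y - z)%C). pose proof (Rle_abs M).
  assert (Cmod (y - z)%C * (Rabs M + 1) <= eps).
  { apply Rle_div_r; [pose proof (Rabs_pos M); lra|]. lra. }
  nra.
Qed.

Lemma quad_approx_cdiff F z L : quad_approx F z L -> cdiff F z.
Proof. intros H. exists L. apply quad_approx_is_derive, H. Qed.

Lemma quad_approx_mul_affine (F G : C -> C) (w p L : C) (rho : R) :
  0 < rho -> quad_approx F w L ->
  (forall h, Cmod h < rho -> G (w + h)%C = ((w + h - p) * F (w + h))%C) ->
  quad_approx G w (F w + (w - p) * L)%C.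
Proof.
  intros Hrho [r [Hr [M HF]]] HG.
  assert (Hw : G w = ((w - p) * F w)%C).
  { specialize (HG 0%C). rewrite Cmod_0, !Cplus_0_r in HG. auto. }
  exists (Rmin r rho). split; [apply Rmin_pos; auto|].
  exists (Cmod L + Rabs M * r + Cmod (w - p)%C * Rabs M).
  intros h Hh. pose proof (Rmin_l r rho). pose proof (Rmin_r r rho).
  rewrite HG, Hw by lra.
  replace ((w + h - p) * F (w + h) - (w - p) * F w - (F w + (w - p) * L) * h)%C
    with (h * (F (w + h) - F w) + (w - p) * (F (w + h) - F w - L * h))%C by ring.
  specialize (HF h ltac:(lra)).
  set (R2 := (F (w + h) - F w - L * h)%C) in *.
  pose proof (Cmod_ge_0 h). pose proof (Cmod_ge_0 (w - p)%C). pose proof (Rle_abs M).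
  pose proof (Cmod_ge_0 R2). pose proof (pow2_ge_0 (Cmod h)).
  assert (HR2 : Cmod R2 <= Rabs M * Cmod h ^ 2) by nra.
  assert (E1 : Cmod (F (w + h) - F w)%C <= Cmod L * Cmod h + Rabs M * Cmod h ^ 2).
  { replace (F (w + h) - F w)%C with (L * h + R2)%C by (unfold R2; ring).
    eapply Rle_trans; [apply Cmod_triangle|]. rewrite Cmod_mult. lra. }
  eapply Rle_trans; [apply Cmod_triangle|]. rewrite !Cmod_mult.
  assert (Cmod h * Cmod (F (w + h) - F w)%C <= Cmod h * (Cmod L * Cmod h + Rabs M * Cmod h ^ 2))
    by (apply Rmult_le_compat_l; auto).
  assert (Cmod (w - p)%C * Cmod R2 <= Cmod (w - p)%C * (Rabs M * Cmod h ^ 2))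
    by (apply Rmult_le_compat_l; auto).
  assert (Rabs M * Cmod h ^ 2 * Cmod h <= Rabs M * Cmod h ^ 2 * r)
    by (apply Rmult_le_compat_l; [apply Rmult_le_pos; [apply Rabs_pos|lra]|lra]).
  nra.
Qed.

(** * The denominator of [psi] *)

Definition sech_den (a : R) (u : C) : C := (cexp (RtoC a * u) + cexp (- (RtoC a * u)))%C.
Definition sech_den_deriv (a : R) (u : C) : C :=
  (RtoC a * (cexp (RtoC a * u) - cexp (- (RtoC a * u))))%C.
Definition psi_deriv (a : R) (u : C) : C :=
  (- (2 * sech_den_deriv a u) / (sech_den a u * sech_den a u))%C.

Lemma psi_sech_den a u : psi a u = (2 / sech_den a u)%C.
Proof. reflexivity. Qed.

Lemma RtoC_mul_pair a u : (RtoC a * u)%C = (a * Re u, a * Im u).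
Proof. destruct u; apply injective_projections; simpl; ring. Qed.

Lemma Cmod_RtoC_mul a h : 0 <= a -> Cmod (RtoC a * h)%C = a * Cmod h.
Proof. intros. rewrite Cmod_mult, Cmod_R, Rabs_pos_eq; auto. Qed.

Lemma Cmod_sech_den_sqr a s t :
  Cmod (sech_den a (s, t)) ^ 2 = (exp (a * s) - exp (- (a * s))) ^ 2 + 4 * cos (a * t) ^ 2.
Proof.
  rewrite Cmod2_alt. unfold sech_den. rewrite RtoC_mul_pair. unfold cexp, Re, Im.
  cbn [fst snd Copp Cplus]. rewrite cos_neg, sin_neg.
  pose proof (exp_mul_exp_opp (a * s)) as HX. pose proof (sin2_cos2 (a * t)) as Hsc.
  rewrite !Rsqr_pow2 in Hsc.
  set (X := exp (a * s)) in *. set (Y := exp (- (a * s))) in *.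
  set (c := cos (a * t)) in *. set (sn := sin (a * t)) in *.
  replace ((X * c + Y * c) ^ 2 + (X * sn + Y * - sn) ^ 2)
    with ((X - Y) ^ 2 * (sn ^ 2 + c ^ 2) + 4 * (X * Y) * c ^ 2) by ring.
  rewrite HX, Hsc. ring.
Qed.

Lemma sech_den_ge_sinh a s t :
  Rabs (exp (a * s) - exp (- (a * s))) <= Cmod (sech_den a (s, t)).
Proof.
  rewrite <- (Rabs_pos_eq (Cmod _)) by apply Cmod_ge_0. apply Rsqr_le_abs_0.
  rewrite !Rsqr_pow2, Cmod_sech_den_sqr. pose proof (pow2_ge_0 (cos (a * t))). lra.
Qed.

Lemma sech_den_ge_cos a s t : 2 * Rabs (cos (a * t)) <= Cmod (sech_den a (s, t)).
Proof.
  rewrite <- (Rabs_pos_eq 2), <- Rabs_mult by lra.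
  rewrite <- (Rabs_pos_eq (Cmod _)) by apply Cmod_ge_0. apply Rsqr_le_abs_0.
  rewrite !Rsqr_pow2, Cmod_sech_den_sqr.
  pose proof (pow2_ge_0 (exp (a * s) - exp (- (a * s)))). nra.
Qed.

Lemma sech_den_ge_far a s t : 0 < a -> / 2 <= Rabs s ->
  exp (a * Rabs s) * (1 - exp (- a)) <= Cmod (sech_den a (s, t)).
Proof.
  intros Ha Hs. eapply Rle_trans; [|apply sech_den_ge_sinh].
  rewrite Rabs_exp_sub_exp_opp, Rabs_mult, (Rabs_pos_eq a) by lra.
  assert (exp (- (a * Rabs s)) <= exp (a * Rabs s) * exp (- a)).
  { rewrite <- exp_plus. apply exp_le_exp. nra. }
  lra.
Qed.

Lemma exp_add_exp_opp_mul_le a s : 0 <= a -> exp (a * s) + exp (- (a * s)) <= 2 * exp (a * Rabs s).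
Proof.
  intros Ha. rewrite <- (Rabs_pos_eq a Ha) at 3. rewrite <- Rabs_mult.
  apply exp_add_exp_opp_le.
Qed.

Lemma Cmod_sech_den_le a u : 0 <= a -> Cmod (sech_den a u) <= 2 * exp (a * Rabs (Re u)).
Proof.
  intros Ha. unfold sech_den. eapply Rle_trans; [apply Cmod_triangle|].
  rewrite !Cmod_cexp, RtoC_mul_pair. unfold Re at 1 3; cbn [fst snd Copp].
  apply exp_add_exp_opp_mul_le, Ha.
Qed.

Lemma Cmod_sech_den_deriv_le a u :
  0 <= a -> Cmod (sech_den_deriv a u) <= 2 * a * exp (a * Rabs (Re u)).
Proof.
  intros Ha. unfold sech_den_deriv. rewrite Cmod_RtoC_mul by lra.
  replace (2 * a * exp (a * Rabs (Re u))) with (a * (2 * exp (a * Rabs (Re u)))) by ring.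
  apply Rmult_le_compat_l; [lra|].
  unfold Cminus. eapply Rle_trans; [apply Cmod_triangle|]. rewrite Cmod_opp, !Cmod_cexp.
  rewrite RtoC_mul_pair. unfold Re at 1 3; cbn [fst snd Copp].
  apply exp_add_exp_opp_mul_le, Ha.
Qed.

Lemma sech_den_taylor1 a u h :
  (sech_den a (u + h) - sech_den a u - sech_den_deriv a u * h)%C =
  (cexp (RtoC a * u) * (cexp (RtoC a * h) - 1 - RtoC a * h)
   + cexp (- (RtoC a * u)) * (cexp (- (RtoC a * h)) - 1 - (- (RtoC a * h))))%C.
Proof.
  unfold sech_den, sech_den_deriv.
  replace (RtoC a * (u + h))%C with (RtoC a * u + RtoC a * h)%C by ring.
  replace (- (RtoC a * u + RtoC a * h))%C with (- (RtoC a * u) + - (RtoC a * h))%C by ring.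
  rewrite !cexp_add. ring.
Qed.

Lemma Cmod_sech_den_taylor1_le a u h : 0 < a -> a * Cmod h <= 1 ->
  Cmod (sech_den a (u + h) - sech_den a u - sech_den_deriv a u * h)%C
    <= 10 * a ^ 2 * exp (a * Rabs (Re u)) * Cmod h ^ 2.
Proof.
  intros Ha Hh. rewrite sech_den_taylor1.
  eapply Rle_trans; [apply Cmod_triangle|]. rewrite !Cmod_mult, !Cmod_cexp.
  pose proof (Cmod_cexp_taylor1_le (RtoC a * h)%C) as E1.
  pose proof (Cmod_cexp_taylor1_le (- (RtoC a * h))%C) as E2.
  rewrite Cmod_RtoC_mul in E1 by lra. rewrite Cmod_opp, Cmod_RtoC_mul in E2 by lra.
  specialize (E1 Hh). specialize (E2 Hh).
  pose proof (exp_pos (a * Re u)). pose proof (exp_pos (- (a * Re u))).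
  pose proof (exp_add_exp_opp_mul_le a (Re u) ltac:(lra)).
  pose proof (pow2_ge_0 (a * Cmod h)).
  replace (10 * a ^ 2 * exp (a * Rabs (Re u)) * Cmod h ^ 2)
    with (2 * exp (a * Rabs (Re u)) * (5 * (a * Cmod h) ^ 2)) by ring.
  rewrite RtoC_mul_pair. unfold Re in *; cbn [fst snd Copp] in *.
  nra.
Qed.

Section PsiNearRegularPoint.

Variables (a m0 : R) (u : C).
Hypotheses (Ha : 0 < a) (Hm0 : 0 < m0 <= 1)
  (Hlb : m0 * exp (a * Rabs (Re u)) <= Cmod (sech_den a u)).

Let Q := exp (a * Rabs (Re u)).

Lemma Cmod_sech_den_ge_near h : 24 * a * Cmod h <= m0 ->
  Cmod (sech_den a (u + h) - sech_den a u)%C <= 12 * a * Q * Cmod h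
  /\ m0 * Q / 2 <= Cmod (sech_den a (u + h)).
Proof.
  intros Hh2. fold Q in Hlb.
  assert (Hh1 : a * Cmod h <= 1) by (pose proof (Cmod_ge_0 h); nra).
  assert (HQ : 0 < Q) by apply exp_pos. pose proof (Cmod_ge_0 h).
  set (rho := (sech_den a (u + h) - sech_den a u - sech_den_deriv a u * h)%C).
  pose proof (Cmod_sech_den_taylor1_le a u h Ha Hh1) as Hrho. fold rho Q in Hrho.
  pose proof (Cmod_sech_den_deriv_le a u ltac:(lra)) as HL. fold Q in HL.
  assert (Hdiff : Cmod (sech_den a (u + h) - sech_den a u)%C <= 12 * a * Q * Cmod h).
  { replace (sech_den a (u + h) - sech_den a u)%C with (sech_den_deriv a u * h + rho)%C
      by (unfold rho; ring).
    eapply Rle_trans; [apply Cmod_triangle|]. rewrite Cmod_mult.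
    assert (Cmod (sech_den_deriv a u) * Cmod h <= 2 * a * Q * Cmod h)
      by (apply Rmult_le_compat_r; lra).
    assert (10 * a ^ 2 * Q * Cmod h ^ 2 <= 10 * a * Q * Cmod h).
    { replace (10 * a ^ 2 * Q * Cmod h ^ 2) with ((10 * a * Q * Cmod h) * (a * Cmod h)) by ring.
      assert (0 <= 10 * a * Q * Cmod h) by (repeat apply Rmult_le_pos; lra). nra. }
    lra. }
  split; [exact Hdiff|].
  assert (Cmod (sech_den a u)
          <= Cmod (sech_den a (u + h)) + Cmod (sech_den a (u + h) - sech_den a u)%C).
  { replace (sech_den a u) with (sech_den a (u + h) + - (sech_den a (u + h) - sech_den a u))%C at 1
      by ring.
    eapply Rle_trans; [apply Cmod_triangle|]. rewrite Cmod_opp. lra. }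
  assert (12 * a * Q * Cmod h <= m0 * Q / 2) by nra.
  lra.
Qed.

Lemma Cmod_psi_deriv_le : Cmod (psi_deriv a u) <= 4 * a / m0 ^ 2 * exp (- (a * Rabs (Re u))).
Proof.
  fold Q in Hlb |- *. assert (HQ : 0 < Q) by apply exp_pos.
  pose proof (exp_mul_exp_opp (a * Rabs (Re u))) as HQI. fold Q in HQI.
  set (IQ := exp (- (a * Rabs (Re u)))) in *.
  pose proof (Cmod_sech_den_deriv_le a u ltac:(lra)) as HL. fold Q in HL.
  assert (HD : 0 < Cmod (sech_den a u)) by nra.
  unfold psi_deriv. rewrite Cmod_div by (apply Cmod_gt_0; rewrite Cmod_mult; nra).
  rewrite Cmod_opp, !Cmod_mult, Cmod_R, Rabs_right by lra.
  apply Rle_div_l; [nra|].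
  assert (Hden : m0 * Q * (m0 * Q) <= Cmod (sech_den a u) * Cmod (sech_den a u))
    by (apply Rmult_le_compat; nra).
  assert (HK : 0 <= 4 * a / m0 ^ 2 * IQ).
  { repeat apply Rmult_le_pos; try lra; [left; apply Rinv_0_lt_compat, pow_lt; lra|].
    left; apply exp_pos. }
  eapply Rle_trans; [|apply Rmult_le_compat_l; [exact HK|exact Hden]].
  replace (4 * a / m0 ^ 2 * IQ * (m0 * Q * (m0 * Q))) with (4 * a * Q * (Q * IQ))
    by (field; lra).
  rewrite HQI. lra.
Qed.

Lemma Cmod_psi_taylor1_numerator_le h : 24 * a * Cmod h <= m0 ->
  Cmod (- sech_den a u * (sech_den a (u + h) - sech_den a u - sech_den_deriv a u * h)
        + sech_den_deriv a u * h * (sech_den a (u + h) - sech_den a u))%C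
    <= 44 * a ^ 2 * Q ^ 2 * Cmod h ^ 2.
Proof.
  intros Hh. assert (Hh1 : a * Cmod h <= 1) by (pose proof (Cmod_ge_0 h); nra).
  destruct (Cmod_sech_den_ge_near h Hh) as [Hdiff _].
  pose proof (Cmod_sech_den_taylor1_le a u h Ha Hh1) as Hrho.
  pose proof (Cmod_sech_den_deriv_le a u ltac:(lra)) as HL.
  pose proof (Cmod_sech_den_le a u ltac:(lra)) as HDz. fold Q in Hrho, HL, HDz.
  eapply Rle_trans; [apply Cmod_triangle|]. rewrite !Cmod_mult, Cmod_opp.
  set (rho := (sech_den a (u + h) - sech_den a u - sech_den_deriv a u * h)%C) in *.
  assert (Cmod (sech_den a u) * Cmod rho <= 2 * Q * (10 * a ^ 2 * Q * Cmod h ^ 2))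
    by (apply Rmult_le_compat; auto using Cmod_ge_0).
  assert (Cmod (sech_den_deriv a u) * Cmod h * Cmod (sech_den a (u + h) - sech_den a u)%C
          <= 2 * a * Q * Cmod h * (12 * a * Q * Cmod h)).
  { apply Rmult_le_compat; auto using Cmod_ge_0.
    - apply Rmult_le_pos; apply Cmod_ge_0.
    - apply Rmult_le_compat_r; auto using Cmod_ge_0. }
  nra.
Qed.

Lemma Cmod_psi_taylor1_le h : 24 * a * Cmod h <= m0 ->
  Cmod (psi a (u + h) - psi a u - psi_deriv a u * h)%C
    <= 176 * a ^ 2 / m0 ^ 3 * exp (- (a * Rabs (Re u))) * Cmod h ^ 2.
Proof.
  intros Hh. pose proof (Cmod_psi_taylor1_numerator_le h Hh) as HN.
  destruct (Cmod_sech_den_ge_near h Hh) as [_ Hw].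
  fold Q in Hlb. assert (HQ : 0 < Q) by apply exp_pos.
  pose proof (exp_mul_exp_opp (a * Rabs (Re u))) as HQI. fold Q in HQI.
  set (IQ := exp (- (a * Rabs (Re u)))) in *. assert (HIQ : 0 < IQ) by apply exp_pos.
  set (Dz := sech_den a u) in *. set (Dw := sech_den a (u + h)) in *.
  set (L := sech_den_deriv a u) in *.
  assert (HDz0 : 0 < Cmod Dz) by nra. assert (HDw0 : 0 < Cmod Dw) by nra.
  rewrite !psi_sech_den. unfold psi_deriv. fold Dz Dw L.
  replace (2 / Dw - 2 / Dz - (- (2 * L) / (Dz * Dz)) * h)%C
    with (2 * ((- Dz * (Dw - Dz - L * h) + L * h * (Dw - Dz)) / (Dw * (Dz * Dz))))%C
    by (field; split; apply Cmod_gt_0; lra).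
  rewrite Cmod_mult, Cmod_div
    by (apply Cmod_gt_0; rewrite !Cmod_mult; repeat apply Rmult_lt_0_compat; auto).
  rewrite !Cmod_mult, Cmod_R, Rabs_right by lra.
  set (Num := Cmod (- Dz * (Dw - Dz - L * h) + L * h * (Dw - Dz))%C) in *.
  set (Den := Cmod Dw * (Cmod Dz * Cmod Dz)).
  replace (2 * (Num / Den)) with (2 * Num / Den) by (unfold Den; field; lra).
  apply (Rle_div_l _ _ Den); [unfold Den; repeat apply Rmult_lt_0_compat; auto|].
  assert (Hden : m0 * Q / 2 * (m0 * Q * (m0 * Q)) <= Den).
  { apply Rmult_le_compat; try nra. apply Rmult_le_compat; nra. }
  assert (HK : 0 <= 176 * a ^ 2 / m0 ^ 3 * IQ * Cmod h ^ 2).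
  { assert (0 < / m0 ^ 3) by (apply Rinv_0_lt_compat, pow_lt; lra).
    pose proof (Cmod_ge_0 h). unfold Rdiv.
    repeat apply Rmult_le_pos; lra. }
  eapply Rle_trans; [|apply Rmult_le_compat_l; [exact HK|exact Hden]].
  replace (176 * a ^ 2 / m0 ^ 3 * IQ * Cmod h ^ 2 * (m0 * Q / 2 * (m0 * Q * (m0 * Q))))
    with (88 * a ^ 2 * Cmod h ^ 2 * Q ^ 2 * (Q * IQ)) by (field; lra).
  rewrite HQI. lra.
Qed.

Lemma Cmod_psi_sub_le h : 24 * a * Cmod h <= m0 ->
  Cmod (psi a (u + h) - psi a u)%C
    <= (4 * a / m0 ^ 2 + 176 * a / m0 ^ 3) * exp (- (a * Rabs (Re u))) * Cmod h.
Proof.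
  intros Hh. pose proof (Cmod_psi_taylor1_le h Hh) as HT. pose proof Cmod_psi_deriv_le as HD.
  set (e := exp (- (a * Rabs (Re u)))) in *. assert (He : 0 < e) by apply exp_pos.
  assert (Hah : a * Cmod h <= 1) by (pose proof (Cmod_ge_0 h); nra).
  replace (psi a (u + h) - psi a u)%C
    with (psi_deriv a u * h + (psi a (u + h) - psi a u - psi_deriv a u * h))%C by ring.
  eapply Rle_trans; [apply Cmod_triangle|]. rewrite Cmod_mult.
  pose proof (Cmod_ge_0 h).
  assert (Hm3 : 0 < / m0 ^ 3) by (apply Rinv_0_lt_compat, pow_lt; lra).
  assert (176 * a ^ 2 / m0 ^ 3 * e * Cmod h ^ 2 <= 176 * a / m0 ^ 3 * e * Cmod h).
  { replace (176 * a ^ 2 / m0 ^ 3 * e * Cmod h ^ 2)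
      with (176 * a / m0 ^ 3 * e * Cmod h * (a * Cmod h)) by (simpl; field; lra).
    assert (0 <= 176 * a / m0 ^ 3 * e * Cmod h)
      by (unfold Rdiv; repeat apply Rmult_le_pos; lra).
    nra. }
  assert (Cmod (psi_deriv a u) * Cmod h <= 4 * a / m0 ^ 2 * e * Cmod h)
    by (apply Rmult_le_compat_r; lra).
  lra.
Qed.

End PsiNearRegularPoint.

(** * Series indexed by the integers *)

Definition Zhalf_nonneg (b : Z -> R) (n : nat) : R := b (Z.of_nat n).
Definition Zhalf_neg (b : Z -> R) (n : nat) : R := b (- Z.of_nat (S n))%Z.

Definition Zsummable (b : Z -> R) : Prop :=
  ex_series (Zhalf_nonneg b) /\ ex_series (Zhalf_neg b).
Definition ZsumR (b : Z -> R) : R := Series (Zhalf_nonneg b) + Series (Zhalf_neg b).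

Definition Csummable (u : Z -> C) : Prop :=
  Zsummable (fun k => Re (u k)) /\ Zsummable (fun k => Im (u k)).

Lemma Zseries_ZsumR (u : Z -> C) :
  Zseries u = (ZsumR (fun k => Re (u k)), ZsumR (fun k => Im (u k))).
Proof. reflexivity. Qed.

Lemma Zseries_ext (u v : Z -> C) : (forall k, u k = v k) -> Zseries u = Zseries v.
Proof.
  intros H. unfold Zseries. f_equal; f_equal; apply Series_ext; intros n; rewrite H; auto.
Qed.

Lemma Zsummable_sub b1 b2 :
  Zsummable b1 -> Zsummable b2 -> Zsummable (fun k => b1 k - b2 k).
Proof.
  intros [H1 H2] [H3 H4].
  split; [exact (ex_series_minus _ _ H1 H3) | exact (ex_series_minus _ _ H2 H4)].
Qed.

Lemma Zsummable_add b1 b2 :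
  Zsummable b1 -> Zsummable b2 -> Zsummable (fun k => b1 k + b2 k).
Proof.
  intros [H1 H2] [H3 H4].
  split; [exact (ex_series_plus _ _ H1 H3) | exact (ex_series_plus _ _ H2 H4)].
Qed.

Lemma Zsummable_scal_l c b : Zsummable b -> Zsummable (fun k => c * b k).
Proof.
  intros [H1 H2]. split; [exact (ex_series_scal_l c _ H1) | exact (ex_series_scal_l c _ H2)].
Qed.

Lemma Zsummable_scal_r b c : Zsummable b -> Zsummable (fun k => b k * c).
Proof.
  intros [H1 H2]. split; [exact (ex_series_scal_r c _ H1) | exact (ex_series_scal_r c _ H2)].
Qed.

Lemma ZsumR_sub b1 b2 :
  Zsummable b1 -> Zsummable b2 -> ZsumR (fun k => b1 k - b2 k) = ZsumR b1 - ZsumR b2.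
Proof.
  intros [H1 H2] [H3 H4].
  change (Series (fun n => Zhalf_nonneg b1 n - Zhalf_nonneg b2 n)
          + Series (fun n => Zhalf_neg b1 n - Zhalf_neg b2 n) = ZsumR b1 - ZsumR b2).
  rewrite !Series_minus by auto. unfold ZsumR. ring.
Qed.

Lemma ZsumR_add b1 b2 :
  Zsummable b1 -> Zsummable b2 -> ZsumR (fun k => b1 k + b2 k) = ZsumR b1 + ZsumR b2.
Proof.
  intros [H1 H2] [H3 H4].
  change (Series (fun n => Zhalf_nonneg b1 n + Zhalf_nonneg b2 n)
          + Series (fun n => Zhalf_neg b1 n + Zhalf_neg b2 n) = ZsumR b1 + ZsumR b2).
  rewrite !Series_plus by auto. unfold ZsumR. ring.
Qed.

Lemma ZsumR_scal_l c b : ZsumR (fun k => c * b k) = c * ZsumR b.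
Proof.
  change (Series (fun n => c * Zhalf_nonneg b n) + Series (fun n => c * Zhalf_neg b n)
          = c * ZsumR b).
  rewrite !Series_scal_l. unfold ZsumR. ring.
Qed.

Lemma ZsumR_scal_r b c : ZsumR (fun k => b k * c) = ZsumR b * c.
Proof.
  change (Series (fun n => Zhalf_nonneg b n * c) + Series (fun n => Zhalf_neg b n * c)
          = ZsumR b * c).
  rewrite !Series_scal_r. unfold ZsumR. ring.
Qed.

Lemma Csummable_sub u v : Csummable u -> Csummable v -> Csummable (fun k => u k - v k)%C.
Proof. intros [H1 H2] [H3 H4]. split; apply Zsummable_sub; auto. Qed.

Lemma Csummable_scal_l z u : Csummable u -> Csummable (fun k => z * u k)%C.
Proof.
  intros [H1 H2]. destruct z as [x y]. split.
  - change (Zsummable (fun k => x * Re (u k) - y * Im (u k))).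
    apply Zsummable_sub; apply Zsummable_scal_l; auto.
  - change (Zsummable (fun k => x * Im (u k) + y * Re (u k))).
    apply Zsummable_add; apply Zsummable_scal_l; auto.
Qed.

Lemma Zseries_sub u v : Csummable u -> Csummable v ->
  Zseries (fun k => u k - v k)%C = (Zseries u - Zseries v)%C.
Proof.
  intros [H1 H2] [H3 H4]. rewrite !Zseries_ZsumR.
  apply injective_projections; simpl; apply ZsumR_sub; auto.
Qed.

Lemma Zseries_scal_l z u : Csummable u -> Zseries (fun k => z * u k)%C = (z * Zseries u)%C.
Proof.
  intros [H1 H2]. destruct z as [x y]. rewrite !Zseries_ZsumR.
  apply injective_projections; simpl.
  - change (ZsumR (fun k => x * Re (u k) - y * Im (u k)) = x * ZsumR (fun k => Re (u k))
             - y * ZsumR (fun k => Im (u k))).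
    rewrite ZsumR_sub, !ZsumR_scal_l by (apply Zsummable_scal_l; auto). reflexivity.
  - change (ZsumR (fun k => x * Im (u k) + y * Re (u k)) = x * ZsumR (fun k => Im (u k))
             + y * ZsumR (fun k => Re (u k))).
    rewrite ZsumR_add, !ZsumR_scal_l by (apply Zsummable_scal_l; auto). reflexivity.
Qed.

Lemma Rabs_Series_le (u b : nat -> R) :
  (forall n, Rabs (u n) <= b n) -> ex_series b -> Rabs (Series u) <= Series b.
Proof.
  intros H Hb.
  assert (Hu : ex_series (fun n => Rabs (u n))).
  { apply (@ex_series_le R_AbsRing R_CompleteNormedModule _ b); auto.
    intros n. change (Rabs (Rabs (u n)) <= b n).
    rewrite Rabs_Rabsolu. auto. }
  eapply Rle_trans; [apply Series_Rabs; auto|].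
  apply Series_le; auto. intros n; split; auto. apply Rabs_pos.
Qed.

Lemma Zsummable_Rabs_le (v b : Z -> R) :
  (forall k, Rabs (v k) <= b k) -> Zsummable b ->
  Zsummable v /\ Rabs (ZsumR v) <= ZsumR b.
Proof.
  intros H [Hp Hn]. split; [split|].
  - apply (@ex_series_le R_AbsRing R_CompleteNormedModule _ (Zhalf_nonneg b)); auto.
    intros n; apply H.
  - apply (@ex_series_le R_AbsRing R_CompleteNormedModule _ (Zhalf_neg b)); auto. intros n; apply H.
  - unfold ZsumR. eapply Rle_trans; [apply Rabs_triang|].
    apply Rplus_le_compat; apply Rabs_Series_le; auto; intros n; apply H.
Qed.

Lemma Csummable_Cmod_le (u : Z -> C) (b : Z -> R) :
  (forall k, Cmod (u k) <= b k) -> Zsummable b ->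
  Csummable u /\ Cmod (Zseries u) <= 2 * ZsumR b.
Proof.
  intros H Hb.
  destruct (Zsummable_Rabs_le (fun k => Re (u k)) b) as [H1 H2]; auto.
  { intros k. eapply Rle_trans; [apply re_le_Cmod|auto]. }
  destruct (Zsummable_Rabs_le (fun k => Im (u k)) b) as [H3 H4]; auto.
  { intros k. eapply Rle_trans; [apply im_le_Cmod|auto]. }
  split; [split; auto|].
  rewrite Zseries_ZsumR. eapply Rle_trans; [apply Cmod_le_Rabs_add|]. simpl. lra.
Qed.

Lemma Zseries_quad_approx (u : Z -> C -> C) (d : Z -> C) (z : C) (r : R) (M : Z -> R) :
  0 < r -> Zsummable M -> Csummable d ->
  (forall h, Cmod h < r -> Csummable (fun k => u k (z + h)%C)) ->
  (forall k h, Cmod h < r -> Cmod (u k (z + h) - u k z - d k * h)%C <= M k * Cmod h ^ 2) ->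
  quad_approx (fun w => Zseries (fun k => u k w)) z (Zseries d).
Proof.
  intros Hr HM Hd Hu HQ.
  assert (Hz : Csummable (fun k => u k z)).
  { specialize (Hu 0%C). rewrite Cmod_0, Cplus_0_r in Hu. auto. }
  exists r. split; auto. exists (2 * ZsumR M). intros h Hh.
  assert (Hdh : Csummable (fun k => h * d k)%C) by (apply Csummable_scal_l, Hd).
  rewrite Cmult_comm, <- Zseries_scal_l, <- !Zseries_sub by
    (auto using Csummable_sub).
  destruct (Csummable_Cmod_le (fun k => u k (z + h) - u k z - h * d k)%C
              (fun k => M k * Cmod h ^ 2)) as [_ Hb].
  - intros k. rewrite (Cmult_comm h). auto.
  - apply Zsummable_scal_r, HM.
  - rewrite ZsumR_scal_r in Hb. lra.
Qed.

(** * Summability of the exponential weights *)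

Lemma ex_series_nonneg_le (u : nat -> R) B :
  (forall n, 0 <= u n) -> (forall N, sum_f_R0 u N <= B) -> ex_series u /\ Series u <= B.
Proof.
  intros Hpos HB.
  assert (HB' : forall N, sum_n u N <= B) by (intros N; rewrite sum_n_Reals; auto).
  destruct (ex_finite_lim_seq_incr (sum_n u) B) as [l Hl]; auto.
  { intros n. rewrite sum_Sn. specialize (Hpos (S n)). simpl. unfold plus; simpl. lra. }
  split; [exists l; exact Hl|].
  rewrite (is_series_unique u l Hl).
  apply (is_lim_seq_le (sum_n u) (fun _ => B) l B); auto. apply is_lim_seq_const.
Qed.

Lemma sum_le_telescope (b f : nat -> R) K N :
  (forall n, b n <= K * (f (S n) - f n)) -> sum_f_R0 b N <= K * (f (S N) - f 0%nat).
Proof.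
  intros H. induction N as [|N IH]; simpl; [apply H|].
  eapply Rle_trans; [apply Rplus_le_compat; [exact IH|apply H]|]. right; ring.
Qed.

Definition logistic (a v : R) : R := / (1 + exp (- (a * v))).

Lemma logistic_bounds a v : 0 < logistic a v < 1.
Proof.
  unfold logistic. pose proof (exp_pos (- (a * v))). split.
  - apply Rinv_0_lt_compat; lra.
  - rewrite <- Rinv_1. apply Rinv_lt_contravar; lra.
Qed.

(* [exp (-a|v|)] is comparable to the increment of the logistic function over [v, v + 1]; summing
   these increments telescopes, which bounds the weights below uniformly in the centre [x]. *)
Lemma exp_le_logistic_incr a v : 0 < a ->
  exp (- (a * Rabs v)) <= 4 / (1 - exp (- a)) * (logistic a (v + 1) - logistic a v).
Proof.
  intros Ha. unfold logistic.
  set (E := exp (- (a * v))). set (q := exp (- a)).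
  assert (HE : 0 < E) by apply exp_pos.
  assert (Hq : 0 < q < 1) by (apply exp_opp_bounds, Ha).
  replace (exp (- (a * (v + 1)))) with (E * q)
    by (unfold E, q; rewrite <- exp_plus; f_equal; ring).
  replace (4 / (1 - q) * (/ (1 + E * q) - / (1 + E))) with (4 * E / ((1 + E) * (1 + E * q)))
    by (field; nra).
  apply Rle_div_r; [nra|].
  destruct (Rle_dec 0 v).
  - rewrite Rabs_right by lra. fold E.
    assert (E <= 1) by (unfold E; rewrite <- exp_0; apply exp_le_exp; nra).
    assert ((1 + E) * (1 + E * q) <= 4) by (assert (E * q <= 1) by nra; nra).
    nra.
  - rewrite Rabs_left by lra.
    replace (exp (- (a * - v))) with (/ E) by (unfold E; rewrite <- exp_Ropp; f_equal; ring).
    assert (1 <= E) by (unfold E; rewrite <- exp_0; apply exp_le_exp; nra).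
    apply (Rmult_le_reg_l E); [lra|].
    replace (E * (/ E * ((1 + E) * (1 + E * q)))) with ((1 + E) * (1 + E * q)) by (field; lra).
    nra.
Qed.

Definition exp_weight (a x : R) (k : Z) : R := exp (- (a * Rabs (x - IZR k))).

Lemma exp_weight_Zsummable a x : 0 < a ->
  Zsummable (exp_weight a x) /\ ZsumR (exp_weight a x) <= 4 / (1 - exp (- a)).
Proof.
  intros Ha. pose proof (exp_opp_bounds a Ha) as Hq.
  set (K := 4 / (1 - exp (- a))).
  assert (HK : 0 < K) by (apply Rdiv_lt_0_compat; lra).
  destruct (ex_series_nonneg_le (Zhalf_nonneg (exp_weight a x)) (K * (1 - logistic a (- x))))
    as [Hp Sp].
  { intros n; left; apply exp_pos. }
  { intros N. eapply Rle_trans.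
    - apply (sum_le_telescope _ (fun n => logistic a (INR n - x))). intros n.
      unfold Zhalf_nonneg, exp_weight. rewrite <- INR_IZR_INZ, Rabs_minus_sym, S_INR.
      replace (INR n + 1 - x) with (INR n - x + 1) by ring. apply exp_le_logistic_incr, Ha.
    - apply Rmult_le_compat_l; [lra|]. replace (INR 0 - x) with (- x) by (simpl; ring).
      pose proof (logistic_bounds a (INR (S N) - x)). lra. }
  destruct (ex_series_nonneg_le (Zhalf_neg (exp_weight a x)) (K * logistic a (- x)))
    as [Hn Sn].
  { intros n; left; apply exp_pos. }
  { intros N. eapply Rle_trans.
    - apply (sum_le_telescope _ (fun n => - logistic a (- INR n - x))). intros n.
      unfold Zhalf_neg, exp_weight. rewrite opp_IZR, <- INR_IZR_INZ.
      replace (Rabs (x - - INR (S n))) with (Rabs (- INR (S n) - x))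
        by (rewrite <- Rabs_Ropp; f_equal; ring).
      replace (- logistic a (- INR (S n) - x) - - logistic a (- INR n - x))
        with (logistic a (- INR (S n) - x + 1) - logistic a (- INR (S n) - x))
        by (replace (- INR (S n) - x + 1) with (- INR n - x) by (rewrite S_INR; ring); ring).
      apply exp_le_logistic_incr, Ha.
    - apply Rmult_le_compat_l; [lra|]. replace (- INR 0 - x) with (- x) by (simpl; ring).
      pose proof (logistic_bounds a (- INR (S N) - x)). lra. }
  split; [split; auto|]. unfold ZsumR. nra.
Qed.

(** * Bounds for [psi] on horizontal lines *)

Lemma brk_bounds x : - / 2 <= brk x < / 2.
Proof. unfold brk. destruct (base_Int_part (x + / 2)). lra. Qed.

Lemma brk_eq_sub x k : Rabs (x - IZR k) < / 2 -> brk x = x - IZR k.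
Proof.
  intros H. apply Rabs_def2 in H. unfold brk.
  rewrite <- (Int_part_spec (x + / 2) k); [reflexivity|lra].
Qed.

Lemma Cmod_psi_le a u m : 0 < m -> m <= Cmod (sech_den a u) -> Cmod (psi a u) <= 2 / m.
Proof.
  intros Hm HD. rewrite psi_sech_den, Cmod_div by (apply Cmod_gt_0; lra).
  rewrite Cmod_R, Rabs_pos_eq by lra.
  apply Rmult_le_compat_l; [lra|]. apply Rinv_le_contravar; lra.
Qed.

Lemma Cmod_psi_le_far a s t : 0 < a -> / 2 <= Rabs s ->
  Cmod (psi a (s, t)) <= 2 / (1 - exp (- a)) * exp (- (a * Rabs s)).
Proof.
  intros Ha Hs. pose proof (exp_opp_bounds a Ha). pose proof (exp_pos (a * Rabs s)).
  eapply Rle_trans; [apply Cmod_psi_le; [|apply sech_den_ge_far; auto]; nra|].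
  right. rewrite (exp_Ropp (a * Rabs s)). field. lra.
Qed.

Lemma Cmod_psi_ge a b t : 0 < a -> Rabs b <= / 2 -> sech_den a (b, t) <> 0%C ->
  exp (- (a / 2)) <= Cmod (psi a (b, t)).
Proof.
  intros Ha Hb HD. apply Cmod_gt_0 in HD.
  rewrite psi_sech_den, Cmod_div, Cmod_R, Rabs_pos_eq by (try apply Cmod_gt_0; lra).
  pose proof (Cmod_sech_den_le a (b, t) ltac:(lra)) as HDb. unfold Re in HDb; simpl in HDb.
  assert (exp (a * Rabs b) <= exp (a / 2)) by (apply exp_le_exp; nra).
  pose proof (exp_pos (a / 2)).
  apply Rle_trans with (2 / (2 * exp (a / 2))).
  - right. rewrite exp_Ropp. field. lra.
  - apply Rmult_le_compat_l; [lra|]. apply Rinv_le_contravar; lra.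
Qed.

Definition psi_envelope (a : R) (w : C) : R :=
  2 / (1 - exp (- a)) + exp (a / 2) * Cmod (psi a (brk (Re w), Im w)).

Lemma psi_envelope_pos a w : 0 < a -> 0 < psi_envelope a w.
Proof.
  intros Ha. unfold psi_envelope. pose proof (exp_opp_bounds a Ha).
  assert (0 < 2 / (1 - exp (- a))) by (apply Rdiv_lt_0_compat; lra).
  pose proof (exp_pos (a / 2)). pose proof (Cmod_ge_0 (psi a (brk (Re w), Im w))). nra.
Qed.

Lemma Cmod_psi_shift_le a w k : 0 < a ->
  Cmod (psi a (Re w - IZR k, Im w)) <= psi_envelope a w * exp_weight a (Re w) k.
Proof.
  intros Ha. unfold psi_envelope, exp_weight. destruct w as [s t]. unfold Re, Im; simpl.
  pose proof (exp_opp_bounds a Ha).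
  assert (H2 : 0 <= 2 / (1 - exp (- a))) by (apply Rlt_le, Rdiv_lt_0_compat; lra).
  pose proof (exp_pos (a / 2)). pose proof (exp_pos (- (a * Rabs (s - IZR k)))).
  pose proof (Cmod_ge_0 (psi a (brk s, t))).
  destruct (Rlt_le_dec (Rabs (s - IZR k)) (/ 2)) as [Hnear|Hfar].
  - replace (psi a (s - IZR k, t)) with (psi a (brk s, t))
      by (rewrite (brk_eq_sub s k Hnear); auto).
    assert (1 <= exp (a / 2) * exp (- (a * Rabs (s - IZR k)))).
    { rewrite <- exp_plus, <- exp_0. apply exp_le_exp. nra. }
    assert (Cmod (psi a (brk s, t)) * 1
            <= Cmod (psi a (brk s, t)) * (exp (a / 2) * exp (- (a * Rabs (s - IZR k)))))
      by (apply Rmult_le_compat_l; lra).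
    assert (0 <= 2 / (1 - exp (- a)) * exp (- (a * Rabs (s - IZR k)))) by nra.
    nra.
  - eapply Rle_trans; [apply Cmod_psi_le_far; auto|].
    assert (0 <= exp (a / 2) * Cmod (psi a (brk s, t)) * exp (- (a * Rabs (s - IZR k))))
      by (repeat apply Rmult_le_pos; lra).
    nra.
Qed.

(** * The extension and its holomorphy off [P] *)

Definition psi_term (a : R) (c : Z -> C) (k : Z) (w : C) : C :=
  (c k * psi a ((Re w - IZR k)%R, Im w))%C.
Definition psi_series (a : R) (c : Z -> C) (w : C) : C := Zseries (fun k => psi_term a c k w).

Lemma bound_nonneg (c : Z -> C) N : (forall k, Cmod (c k) <= N) -> 0 <= N.
Proof. intros Hc. pose proof (Hc 0%Z); pose proof (Cmod_ge_0 (c 0%Z)); lra. Qed.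

Lemma in_P_of_sech_den_eq_0 a x y : 0 < a -> sech_den a (brk x, y) = 0%C -> in_P a (x, y).
Proof.
  intros Ha HD.
  pose proof (sech_den_ge_sinh a (brk x) y) as H1. pose proof (sech_den_ge_cos a (brk x) y) as H2.
  rewrite HD, Cmod_0 in H1, H2.
  assert (Hc : cos (a * y) = 0) by (pose proof (Rabs_pos (cos (a * y))); apply Rabs_eq_0; lra).
  assert (Hb : brk x = 0).
  { rewrite Rabs_exp_sub_exp_opp in H1.
    destruct (Req_dec (Rabs (a * brk x)) 0) as [E|E].
    - apply Rabs_eq_0 in E. destruct (Rmult_integral _ _ E); lra.
    - pose proof (Rabs_pos (a * brk x)).
      assert (exp (- Rabs (a * brk x)) < exp (Rabs (a * brk x))) by (apply exp_increasing; lra).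
      lra. }
  destruct (cos_eq_0_0 _ Hc) as [n Hn].
  exists (Int_part (x + / 2)), n. unfold brk in Hb.
  apply injective_projections; simpl; [lra|].
  pose proof PI_RGT_0.
  apply (Rmult_eq_reg_l a); [|lra]. rewrite Hn. field. lra.
Qed.

Lemma sech_den_shift_ge a x y k m0 : 0 < a -> m0 <= 1 - exp (- a) ->
  m0 <= Cmod (sech_den a (brk x, y)) * exp (- (a / 2)) ->
  m0 * exp (a * Rabs (x - IZR k)) <= Cmod (sech_den a ((x - IZR k)%R, y)).
Proof.
  intros Ha Hm1 Hm2. pose proof (exp_pos (a * Rabs (x - IZR k))).
  destruct (Rlt_le_dec (Rabs (x - IZR k)) (/ 2)) as [Hnear|Hfar].
  - assert (Hb : Rabs (brk x) < / 2) by (rewrite (brk_eq_sub x k Hnear); auto).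
    rewrite <- (brk_eq_sub x k Hnear) in *.
    assert (exp (- (a / 2)) * exp (a * Rabs (brk x)) <= 1).
    { rewrite <- exp_plus, <- exp_0. apply exp_le_exp. nra. }
    pose proof (Cmod_ge_0 (sech_den a (brk x, y))).
    assert (m0 * exp (a * Rabs (brk x))
            <= Cmod (sech_den a (brk x, y)) * exp (- (a / 2)) * exp (a * Rabs (brk x)))
      by (apply Rmult_le_compat_r; lra).
    nra.
  - pose proof (sech_den_ge_far a (x - IZR k) y Ha Hfar).
    assert (m0 * exp (a * Rabs (x - IZR k)) <= (1 - exp (- a)) * exp (a * Rabs (x - IZR k)))
      by (apply Rmult_le_compat_r; lra).
    lra.
Qed.

Lemma shift_add (z h : C) k :
  ((Re (z + h) - IZR k)%R, Im (z + h)) = (((Re z - IZR k)%R, Im z) + h)%C.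
Proof. destruct z, h; apply injective_projections; simpl; ring. Qed.

Section PsiSeries.

Variables (a : R) (c : Z -> C) (N : R).
Hypotheses (Ha : 0 < a) (Hc : forall k, Cmod (c k) <= N).

Lemma Cmod_psi_term_le k w :
  Cmod (psi_term a c k w) <= exp_weight a (Re w) k * (N * psi_envelope a w).
Proof.
  unfold psi_term. rewrite Cmod_mult.
  pose proof (Cmod_psi_shift_le a w k Ha). pose proof (Cmod_ge_0 (c k)).
  pose proof (Cmod_ge_0 (psi a (Re w - IZR k, Im w))).
  replace (exp_weight a (Re w) k * (N * psi_envelope a w))
    with (N * (psi_envelope a w * exp_weight a (Re w) k)) by ring.
  apply Rmult_le_compat; auto.
Qed.

Lemma psi_series_summable w :
  Csummable (fun k => psi_term a c k w)
  /\ Cmod (psi_series a c w) <= 8 / (1 - exp (- a)) * (N * psi_envelope a w).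
Proof.
  destruct (exp_weight_Zsummable a (Re w) Ha) as [HZ HS].
  destruct (Csummable_Cmod_le (fun k => psi_term a c k w) _ (fun k => Cmod_psi_term_le k w)
              (Zsummable_scal_r _ (N * psi_envelope a w) HZ)) as [Hcv Hb].
  split; auto. unfold psi_series. rewrite ZsumR_scal_r in Hb.
  pose proof (bound_nonneg c N Hc). pose proof (psi_envelope_pos a w Ha).
  assert (0 <= N * psi_envelope a w) by nra.
  replace (8 / (1 - exp (- a))) with (2 * (4 / (1 - exp (- a)))) by (unfold Rdiv; ring).
  nra.
Qed.

Section AtRegularPoint.

Variables (x y m0 : R).
Hypotheses (Hm0 : 0 < m0 <= 1)
  (Hmb : forall k, m0 * exp (a * Rabs (x - IZR k)) <= Cmod (sech_den a ((x - IZR k)%R, y))).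

Lemma Cmod_psi_deriv_term_le k :
  Cmod (c k * psi_deriv a ((x - IZR k)%R, y))%C <= exp_weight a x k * (N * (4 * a / m0 ^ 2)).
Proof.
  rewrite Cmod_mult.
  pose proof (Cmod_psi_deriv_le a m0 ((x - IZR k)%R, y) Ha Hm0 (Hmb k)) as Hd.
  unfold Re in Hd; simpl in Hd.
  pose proof (Hc k). pose proof (Cmod_ge_0 (c k)).
  replace (exp_weight a x k * (N * (4 * a / m0 ^ 2)))
    with (N * (4 * a / m0 ^ 2 * exp (- (a * Rabs (x - IZR k))))) by (unfold exp_weight; ring).
  apply Rmult_le_compat; auto using Cmod_ge_0.
Qed.

Lemma Cmod_psi_term_taylor1_le k h : 24 * a * Cmod h <= m0 ->
  Cmod (psi_term a c k ((x, y) + h) - psi_term a c k (x, y)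
        - c k * psi_deriv a ((x - IZR k)%R, y) * h)%C
    <= exp_weight a x k * (N * (176 * a ^ 2 / m0 ^ 3)) * Cmod h ^ 2.
Proof.
  intros Hh. unfold psi_term. rewrite shift_add. unfold Re, Im; cbn [fst snd].
  set (u := ((x - IZR k)%R, y)).
  replace (c k * psi a (u + h) - c k * psi a u - c k * psi_deriv a u * h)%C
    with (c k * (psi a (u + h) - psi a u - psi_deriv a u * h))%C by ring.
  rewrite Cmod_mult.
  pose proof (Cmod_psi_taylor1_le a m0 u Ha Hm0 (Hmb k) h Hh) as HT.
  pose proof (Hc k). pose proof (Cmod_ge_0 (c k)).
  replace (exp_weight a x k * (N * (176 * a ^ 2 / m0 ^ 3)) * Cmod h ^ 2)
    with (N * (176 * a ^ 2 / m0 ^ 3 * exp (- (a * Rabs (Re u))) * Cmod h ^ 2))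
    by (unfold exp_weight, u, Re; simpl; ring).
  apply Rmult_le_compat; auto using Cmod_ge_0.
Qed.

End AtRegularPoint.

Lemma psi_series_quad_approx z : ~ in_P a z ->
  quad_approx (psi_series a c) z (Zseries (fun k => c k * psi_deriv a ((Re z - IZR k)%R, Im z))%C).
Proof.
  intros HP. destruct z as [x y]. unfold Re, Im; cbn [fst snd].
  pose proof (exp_opp_bounds a Ha) as Hq.
  assert (HD : 0 < Cmod (sech_den a (brk x, y))).
  { apply Cmod_gt_0. intros E. apply HP, in_P_of_sech_den_eq_0; auto. }
  set (m0 := Rmin (1 - exp (- a)) (Cmod (sech_den a (brk x, y)) * exp (- (a / 2)))).
  assert (Hm0 : 0 < m0 <= 1).
  { split; [apply Rmin_pos; [lra|apply Rmult_lt_0_compat; [auto|apply exp_pos]]|].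
    unfold m0. pose proof (Rmin_l (1 - exp (- a)) (Cmod (sech_den a (brk x, y)) * exp (- (a / 2)))).
    lra. }
  assert (Hmb : forall k, m0 * exp (a * Rabs (x - IZR k)) <= Cmod (sech_den a ((x - IZR k)%R, y))).
  { intros k. apply sech_den_shift_ge; auto; [apply Rmin_l|apply Rmin_r]. }
  destruct (exp_weight_Zsummable a x Ha) as [HZ _].
  apply (Zseries_quad_approx _ _ _ (m0 / (24 * a))
           (fun k => exp_weight a x k * (N * (176 * a ^ 2 / m0 ^ 3)))).
  - apply Rdiv_lt_0_compat; lra.
  - apply Zsummable_scal_r, HZ.
  - exact (proj1 (Csummable_Cmod_le _ _ (Cmod_psi_deriv_term_le x y m0 Hm0 Hmb)
                    (Zsummable_scal_r _ _ HZ))).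
  - intros h _. apply (psi_series_summable ((x, y) + h)%C).
  - intros k h Hh. apply Cmod_psi_term_taylor1_le; auto.
    apply Rlt_le in Hh. apply Rle_div_r in Hh; lra.
Qed.

End PsiSeries.

(** * Simple poles *)

Lemma Rabs_IZR_sub_ge_1 (m k : Z) : m <> k -> 1 <= Rabs (IZR m - IZR k).
Proof.
  intros H. rewrite <- minus_IZR, <- abs_IZR. apply IZR_le. lia.
Qed.

Lemma in_P_eq_of_close a w p : 0 < a -> in_P a w -> in_P a p ->
  Cmod (w - p)%C < Rmin 1 (PI / a) -> w = p.
Proof.
  intros Ha [m1 [n1 Hw]] [m2 [n2 Hp]] H.
  pose proof (Rmin_l 1 (PI / a)). pose proof (Rmin_r 1 (PI / a)).
  pose proof (re_le_Cmod (w - p)%C) as Hre. pose proof (im_le_Cmod (w - p)%C) as Him.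
  subst w p. unfold Re, Im in Hre, Him; simpl in Hre, Him.
  assert (m1 = m2).
  { destruct (Z.eq_dec m1 m2) as [|Hne]; auto. apply Rabs_IZR_sub_ge_1 in Hne.
    unfold Rminus in Hne. lra. }
  assert (n1 = n2).
  { destruct (Z.eq_dec n1 n2) as [|Hne]; auto. apply Rabs_IZR_sub_ge_1 in Hne.
    pose proof PI_RGT_0. assert (HPa : 0 < PI / a) by (apply Rdiv_lt_0_compat; lra).
    replace (PI / a * (/ 2 + IZR n1) + - (PI / a * (/ 2 + IZR n2)))
      with (PI / a * (IZR n1 - IZR n2)) in Him by ring.
    rewrite Rabs_mult, (Rabs_pos_eq (PI / a)) in Him by lra. nra. }
  subst. reflexivity.
Qed.

Definition pole (a : R) (m n : Z) : C := (IZR m, PI / a * (/ 2 + IZR n)).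
Definition sech_den_zero (a : R) (n : Z) : C := (0, PI / a * (/ 2 + IZR n)).
Definition residue (a : R) (n : Z) : C := (2 / sech_den_deriv a (sech_den_zero a n))%C.

Section SechDenZero.

Variables (a : R) (n : Z).
Hypothesis (Ha : 0 < a).

Let E0 := cexp (RtoC a * sech_den_zero a n).

Lemma cexp_opp_sech_den_zero : cexp (- (RtoC a * sech_den_zero a n)) = (- E0)%C.
Proof.
  unfold E0, sech_den_zero. rewrite RtoC_mul_pair. unfold cexp, Re, Im; cbn [fst snd Copp].
  replace (a * (PI / a * (/ 2 + IZR n))) with (PI / 2 + IZR n * PI) by (field; lra).
  rewrite cos_neg, sin_neg, cos_plus, cos_PI2, sin_PI2, sin_eq_0_1 by (exists n; auto).
  rewrite Rmult_0_r, Ropp_0. apply injective_projections; simpl; ring.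
Qed.

Lemma Cmod_cexp_sech_den_zero : Cmod E0 = 1.
Proof.
  unfold E0, sech_den_zero. rewrite Cmod_cexp, RtoC_mul_pair. unfold Re; simpl.
  rewrite Rmult_0_r. apply exp_0.
Qed.

Lemma sech_den_deriv_zero : sech_den_deriv a (sech_den_zero a n) = (2 * RtoC a * E0)%C.
Proof. unfold sech_den_deriv. rewrite cexp_opp_sech_den_zero. fold E0. ring. Qed.

Lemma Cmod_sech_den_deriv_zero : Cmod (sech_den_deriv a (sech_den_zero a n)) = 2 * a.
Proof.
  rewrite sech_den_deriv_zero, !Cmod_mult, Cmod_cexp_sech_den_zero, !Cmod_R, !Rabs_pos_eq by lra.
  ring.
Qed.

Lemma sech_den_zero_add (h : C) :
  (sech_den a (sech_den_zero a n + h) - sech_den_deriv a (sech_den_zero a n) * h)%C =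
  (E0 * (cexp (RtoC a * h) - cexp (- (RtoC a * h)) - 2 * (RtoC a * h)))%C.
Proof.
  rewrite sech_den_deriv_zero. unfold sech_den.
  replace (RtoC a * (sech_den_zero a n + h))%C
    with (RtoC a * sech_den_zero a n + RtoC a * h)%C by ring.
  replace (- (RtoC a * sech_den_zero a n + RtoC a * h))%C
    with (- (RtoC a * sech_den_zero a n) + - (RtoC a * h))%C by ring.
  rewrite !cexp_add, cexp_opp_sech_den_zero. fold E0. ring.
Qed.

(* At a zero of [sech_den] its second derivative [a^2 sech_den] vanishes too, so
   [sech_den (u0 + h) = L0 h + O(h^3)] and [h psi (u0 + h)] is [2 / L0 + O(h^2)]. *)
Lemma Cmod_psi_residue_le (h : C) : h <> 0%C -> a * Cmod h <= / 5 ->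
  Cmod (h * psi a (sech_den_zero a n + h) - residue a n)%C <= 20 * a * Cmod h ^ 2.
Proof.
  intros Hh0 Hh.
  assert (Hhp : 0 < Cmod h) by (apply Cmod_gt_0, Hh0).
  set (G := sech_den a (sech_den_zero a n + h)). set (L := sech_den_deriv a (sech_den_zero a n)).
  set (rho := (G - L * h)%C).
  assert (Hrho : Cmod rho <= 20 * (a * Cmod h) ^ 3).
  { unfold rho, G, L. rewrite sech_den_zero_add, Cmod_mult, Cmod_cexp_sech_den_zero, Rmult_1_l.
    rewrite <- (Cmod_RtoC_mul a h) by lra.
    apply Cmod_cexp_sub_cexp_opp_le. rewrite Cmod_RtoC_mul; lra. }
  assert (HL : Cmod L = 2 * a) by apply Cmod_sech_den_deriv_zero.
  assert (HG : a * Cmod h <= Cmod G).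
  { assert (Cmod (L * h)%C <= Cmod G + Cmod rho).
    { replace (L * h)%C with (G + - rho)%C by (unfold rho; ring).
      eapply Rle_trans; [apply Cmod_triangle|]. rewrite Cmod_opp. lra. }
    rewrite Cmod_mult, HL in H.
    assert (20 * (a * Cmod h) ^ 3 <= a * Cmod h).
    { replace (20 * (a * Cmod h) ^ 3) with ((a * Cmod h) * (20 * (a * Cmod h) ^ 2)) by ring.
      assert (0 <= a * Cmod h) by nra. assert (20 * (a * Cmod h) ^ 2 <= 1) by nra. nra. }
    lra. }
  assert (HGp : 0 < Cmod G) by nra.
  unfold residue. rewrite psi_sech_den. fold G L.
  replace (h * (2 / G) - 2 / L)%C with ((- (2) * rho) / (G * L))%C
    by (unfold rho; field; split; apply Cmod_gt_0; lra).
  rewrite Cmod_div by (apply Cmod_gt_0; rewrite Cmod_mult; nra).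
  rewrite !Cmod_mult, Cmod_opp, Cmod_R, Rabs_right, HL by lra.
  apply Rle_div_l; [nra|].
  rewrite Rpow_mult_distr in Hrho.
  assert (40 * a ^ 3 * Cmod h ^ 3 <= 20 * a * Cmod h ^ 2 * (Cmod G * (2 * a))).
  { replace (40 * a ^ 3 * Cmod h ^ 3) with (20 * a * Cmod h ^ 2 * (a * Cmod h * (2 * a))) by ring.
    apply Rmult_le_compat_l; [pose proof (pow2_ge_0 (Cmod h)); nra|].
    apply Rmult_le_compat_r; lra. }
  lra.
Qed.

End SechDenZero.

(* The terms of [(w - p) * psi_series a c w] for the pole [p = pole a m n], with the removable
   singularity of the [m]-th term filled in by its limit [c m * residue a n]. *)
Definition pole_term (a : R) (c : Z -> C) (m n k : Z) (w : C) : C :=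
  if Z.eq_dec k m then
    if Req_EM_T (Cmod (w - pole a m n)%C) 0 then (c m * residue a n)%C
    else ((w - pole a m n) * psi_term a c k w)%C
  else ((w - pole a m n) * psi_term a c k w)%C.

Definition pole_series (a : R) (c : Z -> C) (m n : Z) (w : C) : C :=
  Zseries (fun k => pole_term a c m n k w).

Lemma pole_term_eq a c m n k (w : C) :
  w <> pole a m n -> pole_term a c m n k w = ((w - pole a m n) * psi_term a c k w)%C.
Proof.
  intros H. unfold pole_term. destruct (Z.eq_dec k m); auto.
  destruct (Req_EM_T (Cmod (w - pole a m n)%C) 0) as [E|]; auto.
  exfalso. apply H, Ceq_minus, Cmod_eq_0, E.
Qed.

Lemma pole_sub_int a m n : ((Re (pole a m n) - IZR m)%R, Im (pole a m n)) = sech_den_zero a n.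
Proof. unfold pole, sech_den_zero, Re, Im; simpl. f_equal. ring. Qed.

Section PoleSeries.

Variables (a : R) (c : Z -> C) (N : R) (m n : Z).
Hypotheses (Ha : 0 < a) (Hc : forall k, Cmod (c k) <= N).

Let p := pole a m n.

Lemma Cmod_pole_term_le k w :
  Cmod (pole_term a c m n k w)
    <= exp_weight a (Re w) k
       * (Cmod (w - p)%C * (N * psi_envelope a w) + N * Cmod (residue a n)).
Proof.
  pose proof (bound_nonneg c N Hc) as HN.
  pose proof (exp_pos (- (a * Rabs (Re w - IZR k)))) as He. fold (exp_weight a (Re w) k) in He.
  pose proof (psi_envelope_pos a w Ha).
  pose proof (Cmod_ge_0 (w - p)%C). pose proof (Cmod_ge_0 (residue a n)).
  assert (0 <= exp_weight a (Re w) k * (N * Cmod (residue a n)))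
    by (repeat apply Rmult_le_pos; lra).
  assert (0 <= exp_weight a (Re w) k * (Cmod (w - p)%C * (N * psi_envelope a w)))
    by (repeat apply Rmult_le_pos; lra).
  unfold pole_term. fold p.
  destruct (Z.eq_dec k m) as [->|Hkm];
    [destruct (Req_EM_T (Cmod (w - p)%C) 0) as [E|E]|].
  - apply Cmod_eq_0, Ceq_minus in E. subst w.
    replace (exp_weight a (Re p) m) with 1
      by (unfold exp_weight, p, pole, Re; simpl; rewrite Rminus_diag, Rabs_R0, Rmult_0_r, Ropp_0;
          symmetry; apply exp_0).
    rewrite Cmod_mult. pose proof (Hc m). pose proof (Cmod_ge_0 (c m)).
    assert (Cmod (c m) * Cmod (residue a n) <= N * Cmod (residue a n))
      by (apply Rmult_le_compat_r; lra).
    nra.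
  - rewrite Cmod_mult. pose proof (Cmod_psi_term_le a c N Ha Hc m w).
    assert (Cmod (w - p)%C * Cmod (psi_term a c m w)
            <= Cmod (w - p)%C * (exp_weight a (Re w) m * (N * psi_envelope a w)))
      by (apply Rmult_le_compat_l; lra).
    nra.
  - rewrite Cmod_mult. pose proof (Cmod_psi_term_le a c N Ha Hc k w).
    assert (Cmod (w - p)%C * Cmod (psi_term a c k w)
            <= Cmod (w - p)%C * (exp_weight a (Re w) k * (N * psi_envelope a w)))
      by (apply Rmult_le_compat_l; lra).
    nra.
Qed.

Lemma pole_series_summable w : Csummable (fun k => pole_term a c m n k w).
Proof.
  destruct (exp_weight_Zsummable a (Re w) Ha) as [HZ _].
  exact (proj1 (Csummable_Cmod_le _ _ (fun k => Cmod_pole_term_le k w)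
                  (Zsummable_scal_r _ _ HZ))).
Qed.

Lemma pole_series_eq w : w <> p -> pole_series a c m n w = ((w - p) * psi_series a c w)%C.
Proof.
  intros Hw. unfold pole_series, psi_series.
  rewrite (Zseries_ext _ (fun k => ((w - p) * psi_term a c k w)%C))
    by (intros; apply pole_term_eq; auto).
  apply Zseries_scal_l, (psi_series_summable a c N Ha Hc).
Qed.

Definition pole_deriv_term (k : Z) : C := if Z.eq_dec k m then 0%C else psi_term a c k p.

Let m0 := 1 - exp (- a).
Let K := 4 * a / m0 ^ 2 + 176 * a / m0 ^ 3 + 20 * a.

Lemma pole_term_taylor_self h : 24 * a * Cmod h <= m0 ->
  Cmod (pole_term a c m n m (p + h) - pole_term a c m n m p - pole_deriv_term m * h)%C
    <= N * (20 * a * Cmod h ^ 2).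
Proof.
  intros Hh. pose proof (exp_opp_bounds a Ha). pose proof (bound_nonneg c N Hc).
  unfold pole_deriv_term, pole_term. fold p.
  destruct (Z.eq_dec m m) as [_|]; [|congruence].
  replace (p - p)%C with (RtoC 0) by ring. rewrite Cmod_0.
  destruct (Req_EM_T 0 0) as [_|]; [|lra].
  replace (p + h - p)%C with h by ring.
  destruct (Req_EM_T (Cmod h) 0) as [E|E].
  - replace (c m * residue a n - c m * residue a n - 0 * h)%C with (RtoC 0) by ring.
    rewrite Cmod_0. pose proof (pow2_ge_0 (Cmod h)). nra.
  - assert (Hh0 : h <> 0%C) by (intros ->; apply E, Cmod_0).
    unfold psi_term. rewrite shift_add. fold p. unfold p. rewrite pole_sub_int.
    replace (h * (c m * psi a (sech_den_zero a n + h)) - c m * residue a n - 0 * h)%C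
      with (c m * (h * psi a (sech_den_zero a n + h) - residue a n))%C by ring.
    rewrite Cmod_mult.
    assert (Hah : a * Cmod h <= / 5) by (pose proof (Cmod_ge_0 h); unfold m0 in Hh; lra).
    pose proof (Cmod_psi_residue_le a n Ha h Hh0 Hah).
    apply Rmult_le_compat; [apply Cmod_ge_0|apply Cmod_ge_0|apply Hc|assumption].
Qed.

Lemma pole_term_taylor_other k h : k <> m -> 24 * a * Cmod h <= m0 ->
  Cmod (pole_term a c m n k (p + h) - pole_term a c m n k p - pole_deriv_term k * h)%C
    <= N * (4 * a / m0 ^ 2 + 176 * a / m0 ^ 3) * exp_weight a (Re p) k * Cmod h ^ 2.
Proof.
  intros Hkm Hh. pose proof (exp_opp_bounds a Ha). pose proof (bound_nonneg c N Hc).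
  unfold pole_deriv_term, pole_term. fold p.
  destruct (Z.eq_dec k m) as [|_]; [congruence|].
  replace (p + h - p)%C with h by ring.
  unfold psi_term. rewrite shift_add.
  set (u := ((Re p - IZR k)%R, Im p)).
  replace (h * (c k * psi a (u + h)) - (p - p) * (c k * psi a u) - c k * psi a u * h)%C
    with (c k * h * (psi a (u + h) - psi a u))%C by ring.
  rewrite !Cmod_mult.
  assert (Hfar : m0 * exp (a * Rabs (Re u)) <= Cmod (sech_den a u)).
  { rewrite Rmult_comm. apply sech_den_ge_far; auto.
    unfold u, p, pole, Re; simpl. pose proof (Rabs_IZR_sub_ge_1 m k (not_eq_sym Hkm)). lra. }
  pose proof (Cmod_psi_sub_le a m0 u Ha ltac:(unfold m0; lra) Hfar h Hh) as Hsub.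
  pose proof (Hc k). pose proof (Cmod_ge_0 (c k)). pose proof (Cmod_ge_0 h).
  replace (N * (4 * a / m0 ^ 2 + 176 * a / m0 ^ 3) * exp_weight a (Re p) k * Cmod h ^ 2)
    with (N * Cmod h
          * ((4 * a / m0 ^ 2 + 176 * a / m0 ^ 3) * exp (- (a * Rabs (Re u))) * Cmod h))
    by (unfold exp_weight, u, Re; simpl; ring).
  apply Rmult_le_compat; auto using Cmod_ge_0.
  - apply Rmult_le_pos; auto using Cmod_ge_0.
  - apply Rmult_le_compat_r; auto.
Qed.

Lemma pole_series_quad_approx_at_pole :
  quad_approx (pole_series a c m n) p (Zseries pole_deriv_term).
Proof.
  pose proof (exp_opp_bounds a Ha). pose proof (bound_nonneg c N Hc).
  assert (Hm0 : 0 < m0) by (unfold m0; lra).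
  assert (HK1 : 0 <= 4 * a / m0 ^ 2 + 176 * a / m0 ^ 3).
  { apply Rplus_le_le_0_compat; apply Rlt_le, Rdiv_lt_0_compat; try lra; apply pow_lt; lra. }
  destruct (exp_weight_Zsummable a (Re p) Ha) as [HZ _].
  apply (Zseries_quad_approx _ _ _ (m0 / (24 * a)) (fun k => exp_weight a (Re p) k * (N * K))).
  - apply Rdiv_lt_0_compat; lra.
  - apply Zsummable_scal_r, HZ.
  - refine (proj1 (Csummable_Cmod_le _ (fun k => exp_weight a (Re p) k * (N * psi_envelope a p))
                     _ (Zsummable_scal_r _ _ HZ))).
    intros k. unfold pole_deriv_term. destruct (Z.eq_dec k m).
    + rewrite Cmod_0. pose proof (psi_envelope_pos a p Ha).
      apply Rmult_le_pos; [left; apply exp_pos|nra].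
    + apply (Cmod_psi_term_le a c N Ha Hc).
  - intros h _. apply pole_series_summable.
  - intros k h Hh.
    assert (Hh' : 24 * a * Cmod h <= m0).
    { apply Rlt_le in Hh. apply Rle_div_r in Hh; lra. }
    pose proof (pow2_ge_0 (Cmod h)).
    assert (Hw : 0 < exp_weight a (Re p) k) by apply exp_pos.
    destruct (Z.eq_dec k m) as [->|Hkm].
    + eapply Rle_trans; [apply pole_term_taylor_self, Hh'|].
      replace (exp_weight a (Re p) m) with 1
        by (unfold exp_weight, p, pole, Re; simpl;
            rewrite Rminus_diag, Rabs_R0, Rmult_0_r, Ropp_0; symmetry; apply exp_0).
      assert (0 <= N * (4 * a / m0 ^ 2 + 176 * a / m0 ^ 3) * Cmod h ^ 2)
        by (apply Rmult_le_pos; [apply Rmult_le_pos|]; lra).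
      unfold K. lra.
    + eapply Rle_trans; [apply pole_term_taylor_other; auto|].
      assert (0 <= N * (20 * a) * exp_weight a (Re p) k * Cmod h ^ 2)
        by (apply Rmult_le_pos; [repeat apply Rmult_le_pos|]; lra).
      unfold K. lra.
Qed.

Lemma pole_series_quad_approx_near w : w <> p -> Cmod (w - p)%C < Rmin 1 (PI / a) ->
  exists L, quad_approx (pole_series a c m n) w L.
Proof.
  intros Hw Hd.
  assert (HP : ~ in_P a w).
  { intros HwP. apply Hw, (in_P_eq_of_close a w p Ha HwP); auto. exists m, n. reflexivity. }
  pose proof (psi_series_quad_approx a c N Ha Hc w HP) as HF.
  eexists. eapply (quad_approx_mul_affine _ _ w p _ (Cmod (w - p)%C)); [|exact HF|].
  - apply Cmod_gt_0. intros E. apply Hw, Ceq_minus, E.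
  - intros h Hh. apply pole_series_eq. intros E.
    assert (Cmod h = Cmod (w - p)%C).
    { replace h with (- (w - p))%C by (replace p with (w + h)%C; ring). apply Cmod_opp. }
    lra.
Qed.

End PoleSeries.

Lemma psi_series_simple_pole a c N p : 0 < a -> (forall k, Cmod (c k) <= N) -> in_P a p ->
  at_most_simple_pole (psi_series a c) p.
Proof.
  intros Ha Hc [m [n Hp]]. change (p = pole a m n) in Hp. subst p.
  exists (Rmin 1 (PI / a)). split.
  { apply Rmin_pos; [lra|]. apply Rdiv_lt_0_compat; [apply PI_RGT_0|lra]. }
  exists (pole_series a c m n). split.
  - intros w Hw. destruct (Req_EM_T (Cmod (w - pole a m n)%C) 0) as [E|E].
    + apply Cmod_eq_0, Ceq_minus in E. subst w.
      eapply quad_approx_cdiff, (pole_series_quad_approx_at_pole a c N m n Ha Hc).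
    + assert (w <> pole a m n)
        by (intros ->; apply E; replace (pole a m n - pole a m n)%C with (RtoC 0) by ring;
            apply Cmod_0).
      destruct (pole_series_quad_approx_near a c N m n Ha Hc w) as [L HL]; auto.
      eapply quad_approx_cdiff, HL.
  - intros w [Hw _]. apply Cmod_gt_0 in Hw.
    rewrite (pole_series_eq a c N m n Ha Hc) by (intros ->; apply Hw; ring).
    field. exact Hw.
Qed.

(** * The pointwise estimates *)

Lemma Cmod_le_linf_norm (c : Z -> C) : bounded_seq c -> forall k, Cmod (c k) <= linf_norm c.
Proof.
  intros [M HM] k. unfold linf_norm.
  set (E := fun r => exists k, r = Cmod (c k)).
  destruct (Lub_Rbar_correct E) as [Hub Hlub].
  assert (Hk : E (Cmod (c k))) by (exists k; auto).
  destruct (Lub_Rbar E) as [l| |] eqn:El; simpl.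
  - exact (Hub _ Hk).
  - exfalso. assert (is_ub_Rbar E M) by (intros r [j ->]; simpl; auto).
    exact (Hlub _ H).
  - exfalso. exact (Hub _ Hk).
Qed.

Lemma psi_envelope_le a x y : 0 < a -> sech_den a (brk x, y) <> 0%C ->
  psi_envelope a (x, y)
    <= (2 / (1 - exp (- a)) + 1) * exp (a / 2) * Cmod (psi a (brk x, y)).
Proof.
  intros Ha HD. unfold psi_envelope, Re, Im; cbn [fst snd].
  pose proof (exp_opp_bounds a Ha).
  assert (Hbr : Rabs (brk x) <= / 2) by (pose proof (brk_bounds x); apply Rabs_le; lra).
  pose proof (Cmod_psi_ge a (brk x) y Ha Hbr HD) as Hlb.
  set (P0 := Cmod (psi a (brk x, y))) in *.
  assert (He : 1 <= exp (a / 2) * P0).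
  { pose proof (exp_mul_exp_opp (a / 2)). pose proof (exp_pos (a / 2)).
    assert (exp (a / 2) * exp (- (a / 2)) <= exp (a / 2) * P0)
      by (apply Rmult_le_compat_l; lra).
    lra. }
  assert (0 < 2 / (1 - exp (- a))) by (apply Rdiv_lt_0_compat; lra).
  assert (2 / (1 - exp (- a)) * 1 <= 2 / (1 - exp (- a)) * (exp (a / 2) * P0))
    by (apply Rmult_le_compat_l; lra).
  lra.
Qed.

Lemma Cmod_psi_series_le a c N x y : 0 < a -> (forall k, Cmod (c k) <= N) -> ~ in_P a (x, y) ->
  Cmod (psi_series a c (x, y))
    <= 8 / (1 - exp (- a)) * ((2 / (1 - exp (- a)) + 1) * exp (a / 2)) * N
       * Cmod (psi a (brk x, y)).
Proof.
  intros Ha Hc Hxy. pose proof (exp_opp_bounds a Ha). pose proof (bound_nonneg c N Hc).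
  assert (HD : sech_den a (brk x, y) <> 0%C)
    by (intros E; apply Hxy, in_P_of_sech_den_eq_0; auto).
  destruct (psi_series_summable a c N Ha Hc (x, y)) as [_ Hb].
  eapply Rle_trans; [exact Hb|].
  pose proof (psi_envelope_le a x y Ha HD).
  assert (0 < 8 / (1 - exp (- a))) by (apply Rdiv_lt_0_compat; lra).
  set (Cq := (2 / (1 - exp (- a)) + 1) * exp (a / 2)) in *.
  replace (8 / (1 - exp (- a)) * Cq * N * Cmod (psi a (brk x, y)))
    with (8 / (1 - exp (- a)) * (N * (Cq * Cmod (psi a (brk x, y))))) by ring.
  apply Rmult_le_compat_l; [lra|]. apply Rmult_le_compat_l; lra.
Qed.

Lemma Cmod_psi_le_inv_Re a b y : 0 < a -> a * b <> 0 -> Cmod (psi a (b, y)) <= / Rabs (a * b).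
Proof.
  intros Ha Hab. assert (Hp : 0 < Rabs (a * b)) by (apply Rabs_pos_lt, Hab).
  eapply Rle_trans.
  - apply (Cmod_psi_le a (b, y) (2 * Rabs (a * b))); [lra|].
    eapply Rle_trans; [|apply sech_den_ge_sinh].
    rewrite Rabs_exp_sub_exp_opp. apply exp_sub_exp_opp_ge, Rabs_pos.
  - right. field. lra.
Qed.

Lemma Rabs_cos_eq_sin_brk t : Rabs (cos t) = Rabs (sin (PI * brk (t / PI - / 2))).
Proof.
  pose proof PI_RGT_0. unfold brk.
  set (I := Int_part (t / PI - / 2 + / 2)).
  replace t with ((PI / 2 - (- (PI * (t / PI - / 2 - IZR I)))) + IZR I * PI) at 1
    by (field; lra).
  rewrite cos_plus, cos_shift, (sin_eq_0_1 (IZR I * PI)) by (exists I; auto).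
  rewrite Rmult_0_r, Rminus_0_r, Rabs_mult, sin_neg, Rabs_Ropp.
  replace (Rabs (cos (IZR I * PI))) with 1; [ring|].
  pose proof (sin2_cos2 (IZR I * PI)) as H1.
  rewrite (sin_eq_0_1 (IZR I * PI)) in H1 by (exists I; auto).
  assert (Rabs (cos (IZR I * PI)) * Rabs (cos (IZR I * PI)) = 1)
    by (rewrite <- Rabs_mult, <- Rabs_R1; f_equal; unfold Rsqr in H1; lra).
  pose proof (Rabs_pos (cos (IZR I * PI))). nra.
Qed.

Lemma Cmod_psi_le_inv_Im a b y : 0 < a -> 2 * brk (a * y / PI - / 2) <> 0 ->
  Cmod (psi a (b, y)) <= / Rabs (2 * brk (a * y / PI - / 2)).
Proof.
  intros Ha Hb. set (be := brk (a * y / PI - / 2)) in *.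
  assert (Hp : 0 < Rabs (2 * be)) by (apply Rabs_pos_lt, Hb).
  assert (Hbe : Rabs be <= / 2)
    by (unfold be; pose proof (brk_bounds (a * y / PI - / 2)); apply Rabs_le; lra).
  eapply Rle_trans.
  - apply (Cmod_psi_le a (b, y) (2 * Rabs (2 * be))); [lra|].
    eapply Rle_trans; [|apply sech_den_ge_cos].
    rewrite Rabs_cos_eq_sin_brk. fold be. rewrite Rabs_mult, (Rabs_pos_eq 2) by lra.
    pose proof (Rabs_sin_PI_mul_ge be Hbe). lra.
  - right. field. lra.
Qed.

Theorem lemma4p4 (a : R) (ha : 0 < a) :
  exists K : R, 0 < K /\
  forall c : Z -> C, bounded_seq c ->
  exists F : C -> C,
    (* F extends f *)
    (forall x : R, F (RtoC x) = f_of a c x) /\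
    (* meromorphic on C with poles contained in P *)
    (forall z : C, ~ in_P a z -> cdiff F z) /\
    (* every pole is simple *)
    (forall p : C, in_P a p -> at_most_simple_pole F p) /\
    (* the estimates *)
    (forall x y : R, ~ in_P a (x, y) ->
       Cmod (F (x, y)) <= K * linf_norm c * Cmod (psi a (brk x, y)) /\
       (a * brk x <> 0 ->
          K * linf_norm c * Cmod (psi a (brk x, y)) <= K * linf_norm c * / Rabs (a * brk x)) /\
       (2 * brk (a * y / PI - / 2) <> 0 ->
          K * linf_norm c * Cmod (psi a (brk x, y))
            <= K * linf_norm c * / Rabs (2 * brk (a * y / PI - / 2)))).
Proof.
  pose proof (exp_opp_bounds a ha) as Hq.
  set (K := 8 / (1 - exp (- a)) * ((2 / (1 - exp (- a)) + 1) * exp (a / 2))).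
  assert (HK : 0 < K).
  { pose proof (exp_pos (a / 2)).
    assert (0 < 2 / (1 - exp (- a))) by (apply Rdiv_lt_0_compat; lra).
    apply Rmult_lt_0_compat; [apply Rdiv_lt_0_compat|apply Rmult_lt_0_compat]; lra. }
  exists K. split; [exact HK|].
  intros c Hcb. pose proof (Cmod_le_linf_norm c Hcb) as Hc.
  pose proof (bound_nonneg c _ Hc) as HN.
  exists (psi_series a c). split; [|split; [|split]].
  - reflexivity.
  - intros z Hz. eapply quad_approx_cdiff, (psi_series_quad_approx a c _ ha Hc z Hz).
  - intros p Hp. apply (psi_series_simple_pole a c _ p ha Hc Hp).
  - intros x y Hxy.
    assert (HKN : 0 <= K * linf_norm c) by (apply Rmult_le_pos; lra).
    split; [|split; intros H; apply Rmult_le_compat_l; auto].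
    + apply (Cmod_psi_series_le a c _ x y ha Hc Hxy).
    + apply Cmod_psi_le_inv_Re; auto.
    + apply Cmod_psi_le_inv_Im; auto.
Qed.
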